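(* $\rho_\mu(t)$ is a continuous function of $(t,s,r,\epsilon)\in[0,\infty)\times[0,\infty)\times\mathcal{I}\times[0,\epsilon_0]$, where $\mu=(s,r,\epsilon)$, and $\rho_\mu'(t)$ and $\rho_\mu''(t)$ are continuous functions on $\big(([0,\infty)\times[0,\infty))\setminus\{(0,0)\}\big)\times\mathcal{I}\times[0,\epsilon_0]$ (the first two coordinates being $(t,s)$).
   Context: Fix $\varphi\in C^\infty(\mathbb{R})$ with $0\le\varphi\le1$, $\varphi(x)=0$ for $x\le0$, $\varphi(x)=1$ for $x\ge1$, and let $H$ be the Heaviside function ($H(x)=1$ for $x>0$, $H(x)=0$ for $x\le0$). For $r>0$, $\epsilon\ge0$ with $r+\epsilon<\pi/2$ and $\rho\ge0$ set $K^\parallel_{r,\epsilon}(\rho)=1-2\varphi((\rho-r)/\epsilon)$ if $\epsilon>0$ and $K^\parallel_{r,0}(\rho)=1-2H(\rho-r)$. Let $\mathcal{A}_{r,\epsilon}$ solve $\mathcal{A}''+K^\parallel_{r,\epsilon}\mathcal{A}=0$, $\mathcal{A}(0)=0$, $\mathcal{A}'(0)=1$ (for $\epsilon=0$: the unique $C^1$ function with these initial values solving the equation on $\rho\ne r$). For $\mu=(s,r,\epsilon)$, $\rho_\mu(t)$ ($t\ge0$) is, for $s>0$, the solution of $\rho''=\frac{\mathcal{A}_{r,\epsilon}'(\rho)}{\mathcal{A}_{r,\epsilon}(\rho)}(1-(\rho')^2)$, $\rho(0)=s$, $\rho'(0)=0$, and $\rho_{0,r,\epsilon}(t)=t$. Fixed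 small constants $\eta,\epsilon_0>0$ are chosen and $\mathcal{I}=[\pi/4-\eta,\pi/4+\eta]$. *)

From Stdlib Require Import Reals Lra.
Open Scope R_scope.

Definition smooth (f : R -> R) : Prop :=
  exists D : nat -> R -> R, D O = f /\
    forall (n : nat) (x : R), derivable_pt_lim (D n) x (D (S n) x).

Definition Heav (x : R) : R := if Rle_dec x 0 then 0 else 1.

Definition Kpar (phi : R -> R) (r eps x : R) : R :=
  if Req_EM_T eps 0 then 1 - 2 * Heav (x - r)
  else 1 - 2 * phi ((x - r) / eps).

(* A (with derivative dA) is the solution A'' + K A = 0, A(0)=0, A'(0)=1;
   for eps = 0: A is C^1 and solves the equation away from x = r. *)
Definition is_A (phi : R -> R) (r eps : R) (A dA : R -> R) : Prop :=
  A 0 = 0 /\ dA 0 = 1 /\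
  (forall x, derivable_pt_lim A x (dA x)) /\
  (forall x, continuity_pt dA x) /\
  (forall x, (0 < eps \/ x <> r) ->
     derivable_pt_lim dA x (- (Kpar phi r eps x * A x))).

Definition is_rho (A dA : R -> R) (s : R) (rho drho ddrho : R -> R) : Prop :=
  (forall t, 0 <= t -> derivable_pt_lim rho t (drho t)) /\
  (forall t, 0 <= t -> derivable_pt_lim drho t (ddrho t)) /\
  (0 < s ->
     rho 0 = s /\ drho 0 = 0 /\
     forall t, 0 <= t ->
       ddrho t = dA (rho t) / A (rho t) * (1 - (drho t) ^ 2)) /\
  (s = 0 -> forall t, rho t = t).

Definition cont4_on (D : R -> R -> R -> R -> Prop) (f : R -> R -> R -> R -> R) : Prop :=
  forall t s r e, D t s r e ->
    forall eps, 0 < eps -> exists del, 0 < del /\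
      forall t' s' r' e', D t' s' r' e' ->
        Rabs (t' - t) < del -> Rabs (s' - s) < del ->
        Rabs (r' - r) < del -> Rabs (e' - e) < del ->
        Rabs (f t' s' r' e' - f t s r e) < eps.

Definition Dom1 (eta eps0 : R) (t s r e : R) : Prop :=
  0 <= t /\ 0 <= s /\ PI / 4 - eta <= r <= PI / 4 + eta /\ 0 <= e <= eps0.

Definition Dom2 (eta eps0 : R) (t s r e : R) : Prop :=
  Dom1 eta eps0 t s r e /\ ~ (t = 0 /\ s = 0).

(* [A] equals [sin] on [[0, r]]; by Sturm comparison with [sin] it stays positive with [A' > 0]
   up to [pi / 2], and beyond [r + e] it solves [A'' = A] with positive data, so [A, A' > 0] on
   [(0, oo)].  An energy estimate shows that [A] depends continuously on [(r, e)]: the potentials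
   differ little except on an interval of small length.  For [s > 0] Clairaut's relation
   [(1 - rho'^2) A(rho)^2 = A(s)^2] gives [s <= rho] and [0 <= rho' <= 1], so the geodesic stays
   where [A' / A] is bounded and Lipschitz, and a Gronwall estimate for
   [rho'' = A'(rho) / A(rho) (1 - rho'^2)] gives continuity in [(t, s, r, e)].  As [s -> 0] the
   geodesic converges to the ray [rho = t]; once [rho] is away from [0], Clairaut's relation
   forces [1 - rho'] and [rho''] to be [O(s^2)], which gives continuity of [rho'] and [rho'']
   at [s = 0], [t > 0]. *)

From Stdlib Require Import Reals Lra List Classical.
From Coquelicot Require Import Rcomplements.
Open Scope R_scope.

(** * Calculus on intervals *)

Lemma derivable_pt_lim_continuity_pt f x l : derivable_pt_lim f x l -> continuity_pt f x.
Proof. intro H. apply derivable_continuous_pt. exists l. exact H. Qed.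

Lemma derivable_pt_lim_eq f x l1 l2 : derivable_pt_lim f x l1 -> l1 = l2 -> derivable_pt_lim f x l2.
Proof. now intros H <-. Qed.

Ltac derivative_step := first
  [ apply derivable_pt_lim_minus | apply derivable_pt_lim_mult | apply derivable_pt_lim_plus
  | apply derivable_pt_lim_const | apply derivable_pt_lim_id | apply derivable_pt_lim_sin
  | apply derivable_pt_lim_cos | apply derivable_pt_lim_exp | eassumption ].

Ltac derivative_by_rules := eapply derivable_pt_lim_eq; [repeat derivative_step | cbv beta].

Ltac continuity_pt_step := first
  [ apply continuity_pt_minus | apply continuity_pt_mult | apply continuity_pt_plus
  | apply continuity_pt_const; intros ? ?; reflexivity
  | apply (derivable_continuous_pt _ _ (derivable_pt_id _))
  | apply continuity_sin | apply continuity_cos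
  | apply (derivable_continuous_pt _ _ (derivable_pt_exp _)) | assumption ].

Ltac continuity_by_rules := repeat continuity_pt_step.

Lemma exp_le_mono x y : x <= y -> exp x <= exp y.
Proof. intros [H | ->]; [left; apply exp_increasing; exact H | lra]. Qed.

Lemma sqr_nonneg a : 0 <= a * a.
Proof. exact (Rle_0_sqr a). Qed.

Lemma Rabs_le_of_sqr_le a b : 0 <= b -> a * a <= b * b -> Rabs a <= b.
Proof. intros. apply Rabs_le. split; nra. Qed.

Lemma mvt_interior f df a b : a < b ->
  (forall x, a <= x <= b -> continuity_pt f x) ->
  (forall x, a < x < b -> derivable_pt_lim f x (df x)) ->
  exists c, a < c < b /\ f b - f a = df c * (b - a).
Proof.
  intros ab Hc Hd.
  assert (pr : forall c, a < c < b -> derivable_pt f c) by (intros c Hc'; exists (df c); apply Hd; exact Hc').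
  destruct (MVT f id a b pr (fun c _ => derivable_pt_id c) ab Hc
     (fun c _ => derivable_continuous_pt _ _ (derivable_pt_id c))) as [c [P HP]].
  exists c. split; auto. rewrite derive_pt_id in HP.
  rewrite (derive_pt_eq_0 f c (df c) (pr c P) (Hd c P)) in HP. unfold id in HP. lra.
Qed.

Lemma increment_le_of_deriv_le (l : list R) f df k : forall a b, a <= b ->
  (forall x, a <= x <= b -> continuity_pt f x) ->
  (forall x, a < x < b -> ~ In x l -> derivable_pt_lim f x (df x) /\ df x <= k) ->
  f b - f a <= k * (b - a).
Proof.
  induction l as [|c l IH]; intros a b ab Hc Hd.
  - destruct (Req_dec a b) as [-> | nab]; [lra|].
    destruct (mvt_interior f df a b) as [c [Hc1 Hc2]]; [lra | exact Hc | |].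
    + intros x Hx. now apply (Hd x Hx).
    + destruct (Hd c Hc1) as [_ H]; [auto|]. rewrite Hc2. nra.
  - assert (Hd' : forall x, a < x < b -> x <> c -> ~ In x l ->
      derivable_pt_lim f x (df x) /\ df x <= k).
    { intros x Hx Hxc Hn. apply Hd; [exact Hx|]. intros [E|E]; auto. }
    destruct (Rlt_dec a c) as [ac|ac]; [destruct (Rlt_dec c b) as [cb|cb]|].
    + assert (f c - f a <= k * (c - a)).
      { apply IH; [lra | intros; apply Hc; lra | intros x Hx Hn; apply Hd'; auto; lra]. }
      assert (f b - f c <= k * (b - c)).
      { apply IH; [lra | intros; apply Hc; lra | intros x Hx Hn; apply Hd'; auto; lra]. }
      lra.
    + apply IH; auto. intros x Hx Hn. apply Hd'; auto; lra.
    + apply IH; auto. intros x Hx Hn. apply Hd'; auto; lra.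
Qed.

Lemma increment_ge_of_deriv_ge (l : list R) f df k a b : a <= b ->
  (forall x, a <= x <= b -> continuity_pt f x) ->
  (forall x, a < x < b -> ~ In x l -> derivable_pt_lim f x (df x) /\ k <= df x) ->
  k * (b - a) <= f b - f a.
Proof.
  intros ab Hc Hd.
  enough (- f b - - f a <= - k * (b - a)) by lra.
  apply (increment_le_of_deriv_le l (fun x => - f x) (fun x => - df x)); [exact ab | |].
  - intros x Hx. apply continuity_pt_opp. auto.
  - intros x Hx Hn. destruct (Hd x Hx Hn) as [D1 D2]. split; [|lra].
    apply derivable_pt_lim_opp; auto.
Qed.

Lemma abs_increment_le_of_abs_deriv_le (l : list R) f df k a b : a <= b ->
  (forall x, a <= x <= b -> continuity_pt f x) ->
  (forall x, a < x < b -> ~ In x l -> derivable_pt_lim f x (df x) /\ Rabs (df x) <= k) ->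
  Rabs (f b - f a) <= k * (b - a).
Proof.
  intros ab Hc Hd. apply Rabs_le. split.
  - enough (- k * (b - a) <= f b - f a) by lra.
    apply (increment_ge_of_deriv_ge l f df); auto.
    intros x Hx Hn. destruct (Hd x Hx Hn) as [D1 D2]. apply Rabs_le_between in D2. split; auto; lra.
  - apply (increment_le_of_deriv_le l f df); auto.
    intros x Hx Hn. destruct (Hd x Hx Hn) as [D1 D2]. apply Rabs_le_between in D2. split; auto; lra.
Qed.

Lemma lipschitz_of_abs_deriv_le f df k a b :
  (forall x, a <= x <= b -> continuity_pt f x) ->
  (forall x, a < x < b -> derivable_pt_lim f x (df x) /\ Rabs (df x) <= k) ->
  forall x y, a <= x <= b -> a <= y <= b -> Rabs (f x - f y) <= k * Rabs (x - y).
Proof.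
  intros Hc Hd x y Hx Hy. destruct (Rle_dec x y).
  - rewrite Rabs_minus_sym, (Rabs_minus_sym x), (Rabs_right (y - x)) by lra.
    apply (abs_increment_le_of_abs_deriv_le nil f df); [lra | intros; apply Hc; lra |].
    intros z Hz _; apply Hd; lra.
  - rewrite (Rabs_right (x - y)) by lra.
    apply (abs_increment_le_of_abs_deriv_le nil f df); [lra | intros; apply Hc; lra |].
    intros z Hz _; apply Hd; lra.
Qed.

Lemma constant_of_deriv_zero f a b : a <= b ->
  (forall x, a <= x <= b -> continuity_pt f x) ->
  (forall x, a < x < b -> derivable_pt_lim f x 0) -> f b = f a.
Proof.
  intros ab Hc Hd.
  assert (H : Rabs (f b - f a) <= 0 * (b - a)).
  { apply (abs_increment_le_of_abs_deriv_le nil f (fun _ => 0)); auto.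
    intros x Hx _. split; [auto | rewrite Rabs_R0; lra]. }
  pose proof (Rabs_pos (f b - f a)). apply Rabs_le_between in H. lra.
Qed.

(* [E(x) exp (-C (x - a)) - k (x - a)] is nonincreasing. *)
Lemma gronwall (l : list R) E dE a b C k : a <= b -> 0 <= C -> 0 <= k ->
  (forall x, a <= x <= b -> continuity_pt E x) ->
  (forall x, a < x < b -> ~ In x l -> derivable_pt_lim E x (dE x) /\ dE x <= C * E x + k) ->
  E b <= (E a + k * (b - a)) * exp (C * (b - a)).
Proof.
  intros ab HC Hk Hc Hd.
  set (g := fun x => - C * (x - a)).
  assert (Dg : forall x, derivable_pt_lim (fun y => exp (g y)) x (exp (g x) * - C)).
  { intro x. apply (derivable_pt_lim_comp g exp). unfold g. derivative_by_rules. ring.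
    apply derivable_pt_lim_exp. }
  assert (Hb : E b * exp (g b) - k * (b - a) - (E a * exp (g a) - k * (a - a)) <= 0 * (b - a)).
  { apply (increment_le_of_deriv_le l (fun x => E x * exp (g x) - k * (x - a))
      (fun x => dE x * exp (g x) + E x * (exp (g x) * - C) - k)); [exact ab | |].
    - intros x Hx. pose proof (Hc x Hx). pose proof (derivable_pt_lim_continuity_pt _ _ _ (Dg x)).
      continuity_by_rules.
    - intros x Hx Hn. destruct (Hd x Hx Hn) as [D1 D2]. pose proof (Dg x). split.
      + derivative_by_rules. ring.
      + assert (exp (g x) <= 1) by (rewrite <- exp_0; apply exp_le_mono; unfold g; nra).
        pose proof (exp_pos (g x)). nra. }
  unfold g in Hb. replace (a - a) with 0 in Hb by ring. rewrite Rmult_0_r, exp_0 in Hb.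
  assert (Hp : exp (- C * (b - a)) * exp (C * (b - a)) = 1).
  { rewrite <- exp_plus. replace (- C * (b - a) + C * (b - a)) with 0 by ring. apply exp_0. }
  pose proof (exp_pos (C * (b - a))).
  replace (E b) with (E b * exp (- C * (b - a)) * exp (C * (b - a))) by (rewrite Rmult_assoc, Hp; ring).
  apply Rmult_le_compat_r; lra.
Qed.

Lemma continuity_pt_ball f x eps : continuity_pt f x -> 0 < eps ->
  exists d, 0 < d /\ forall y, Rabs (y - x) < d -> Rabs (f y - f x) < eps.
Proof.
  intros Hc He. destruct (Hc eps He) as [d [Hd Hnear]]. exists d. split; [exact Hd|].
  intros y Hy. destruct (Req_dec x y) as [<- | nxy]; [rewrite Rminus_diag, Rabs_R0; exact He|].
  exact (Hnear y (conj (conj I nxy) Hy)).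
Qed.

Lemma continuous_induction_pos f a b : a <= b ->
  (forall x, a <= x <= b -> continuity_pt f x) -> 0 < f a ->
  (forall y, a < y <= b -> (forall x, a <= x < y -> 0 < f x) -> 0 < f y) ->
  forall x, a <= x <= b -> 0 < f x.
Proof.
  intros ab Hc Ha Hstep x0 Hx0.
  destruct (Rlt_le_dec 0 (f x0)) as [P|N]; auto. exfalso.
  set (S := fun y => a <= y <= x0 /\ forall z, a <= z <= y -> 0 < f z).
  assert (Sb : bound S) by (exists x0; intros y [Hy _]; lra).
  assert (Sa : S a) by (split; [lra | intros z Hz; replace z with a by lra; auto]).
  destruct (completeness S Sb (ex_intro _ a Sa)) as [m [Hub Hlub]].
  assert (am : a <= m) by (apply Hub; auto).
  assert (mx : m <= x0) by (apply Hlub; intros y [Hy _]; lra).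
  assert (below : forall z, a <= z < m -> 0 < f z).
  { intros z Hz. destruct (classic (exists y, S y /\ z <= y)) as [[y [[_ Hy] zy]]|nE].
    - apply Hy; lra.
    - assert (m <= z); [|lra]. apply Hlub. intros y Sy. destruct (Rle_dec y z); auto.
      exfalso; apply nE; exists y; split; auto; lra. }
  destruct (Rlt_le_dec 0 (f m)) as [Pm|Nm].
  - destruct (Req_dec m x0) as [E|E]; [subst; lra|].
    destruct (continuity_pt_ball f m (f m) (Hc m ltac:(lra)) Pm) as [d [Hd Hnear]].
    assert (Hpos : forall y, Rabs (y - m) < d -> 0 < f y)
      by (intros y Hy; specialize (Hnear y Hy); apply Rabs_lt_between in Hnear; lra).
    set (y := Rmin (m + d / 2) x0).
    assert (Sy : S y).
    { split; [split; [apply Rmin_glb; lra | apply Rmin_r]|].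
      intros z Hz. destruct (Rlt_le_dec z m); [apply below; lra|].
      assert (y <= m + d / 2) by apply Rmin_l. apply Hpos, Rabs_lt_between; lra. }
    assert (Hym : y <= m) by (apply Hub; auto). unfold y, Rmin in Hym.
    destruct (Rle_dec (m + d / 2) x0); lra.
  - destruct (Req_dec m a) as [E|E]; [subst; lra|].
    assert (0 < f m) by (apply Hstep; [lra | auto]). lra.
Qed.

(** * The profile [A] *)

Definition is_cutoff (phi : R -> R) : Prop := (forall x, 0 <= phi x <= 1) /\
  (forall x, x <= 0 -> phi x = 0) /\ (forall x, 1 <= x -> phi x = 1).

Definition admissible (r e : R) : Prop := 0 < r /\ 0 <= e /\ r + e < PI / 2.

Lemma sin_pos_lt_PI2 x : 0 < x -> x < PI / 2 -> 0 < sin x.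
Proof. intros. apply sin_gt_0; lra. Qed.

Lemma cos_pos_lt_PI2 x : 0 <= x -> x < PI / 2 -> 0 < cos x.
Proof. intros Hx HxPI. apply cos_gt_0; [pose proof PI_RGT_0; lra | exact HxPI]. Qed.

(* [(f + f') exp (- (t - x0))] and [(f' - f) exp (t - x0)] are constant. *)
Lemma hyperbolic_increments f df x0 x : x0 <= x ->
  (forall t, x0 <= t <= x -> continuity_pt f t /\ continuity_pt df t) ->
  (forall t, x0 < t < x -> derivable_pt_lim f t (df t) /\ derivable_pt_lim df t (f t)) ->
  f x + df x = (f x0 + df x0) * exp (x - x0) /\ df x - f x = (df x0 - f x0) * exp (x0 - x).
Proof.
  intros Hx Hc Hd.
  assert (Dexp : forall c t, derivable_pt_lim (fun y => exp (c * (y - x0))) t (exp (c * (t - x0)) * c)).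
  { intros c t. apply (derivable_pt_lim_comp (fun y => c * (y - x0)) exp).
    derivative_by_rules. ring. apply derivable_pt_lim_exp. }
  assert (Hconst : forall c g dg, (forall t, x0 <= t <= x -> continuity_pt g t) ->
     (forall t, x0 < t < x -> derivable_pt_lim g t (dg t) /\ dg t = - c * g t) ->
     g x * exp (c * (x - x0)) = g x0).
  { intros c g dg Hgc Hgd.
    replace (g x0) with (g x0 * exp (c * (x0 - x0)))
      by (replace (c * (x0 - x0)) with 0 by ring; rewrite exp_0; ring).
    apply (constant_of_deriv_zero (fun y => g y * exp (c * (y - x0)))); [exact Hx | |].
    - intros t Ht. pose proof (Hgc t Ht). pose proof (derivable_pt_lim_continuity_pt _ _ _ (Dexp c t)).
      continuity_by_rules.
    - intros t Ht. destruct (Hgd t Ht) as [D E]. pose proof (Dexp c t). derivative_by_rules. rewrite E. ring. }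
  assert (Hexp : exp (x - x0) * exp (x0 - x) = 1)
    by (rewrite <- exp_plus; replace (x - x0 + (x0 - x)) with 0 by ring; apply exp_0).
  assert (Hu := Hconst (-1) (fun y => f y + df y) (fun y => df y + f y)).
  assert (Hw := Hconst 1 (fun y => df y - f y) (fun y => f y - df y)).
  simpl in Hu, Hw. replace (-1 * (x - x0)) with (x0 - x) in Hu by ring.
  replace (1 * (x - x0)) with (x - x0) in Hw by ring.
  rewrite <- Hu, <- Hw.
  - split; rewrite Rmult_assoc; [rewrite (Rmult_comm (exp _)) |]; rewrite Hexp; ring.
  - intros t Ht. destruct (Hc t Ht). continuity_by_rules.
  - intros t Ht. destruct (Hd t Ht). split; [derivative_by_rules; reflexivity | ring].
  - intros t Ht. destruct (Hc t Ht). continuity_by_rules.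
  - intros t Ht. destruct (Hd t Ht). split; [derivative_by_rules; reflexivity | ring].
Qed.

Section KparFacts.
Context {phi : R -> R} (Hphi : is_cutoff phi).

Lemma Kpar_bounds r e x : -1 <= Kpar phi r e x <= 1.
Proof.
  destruct Hphi as [Hb _]. unfold Kpar, Heav. destruct (Req_EM_T e 0).
  - destruct (Rle_dec (x - r) 0); lra.
  - specialize (Hb ((x - r) / e)); lra.
Qed.

Lemma Kpar_left r e x : 0 <= e -> x <= r -> Kpar phi r e x = 1.
Proof.
  destruct Hphi as [_ [H0 _]]. intros He xr. unfold Kpar, Heav. destruct (Req_EM_T e 0).
  - destruct (Rle_dec (x - r) 0); lra.
  - rewrite H0; [ring|]. assert (0 < / e) by (apply Rinv_0_lt_compat; lra). unfold Rdiv; nra.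
Qed.

Lemma Kpar_right r e x : 0 <= e -> r + e <= x -> r < x -> Kpar phi r e x = -1.
Proof.
  destruct Hphi as [_ [_ H1]]. intros He xr xr'. unfold Kpar, Heav. destruct (Req_EM_T e 0).
  - destruct (Rle_dec (x - r) 0); lra.
  - rewrite H1; [ring|]. assert (0 < / e) by (apply Rinv_0_lt_compat; lra).
    assert ((x - r) / e - 1 = (x - r - e) * / e) by (field; lra). unfold Rdiv in *. nra.
Qed.

End KparFacts.

Section Profile.
Context {phi : R -> R} {r e : R} {A dA : R -> R}.
Hypothesis HA : is_A phi r e A dA.

Lemma A_deriv x : derivable_pt_lim A x (dA x).
Proof. apply HA. Qed.

Lemma dA_deriv x : x <> r -> derivable_pt_lim dA x (- (Kpar phi r e x * A x)).
Proof. intro. apply HA. now right. Qed.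

Lemma A_continuous x : continuity_pt A x.
Proof. exact (derivable_pt_lim_continuity_pt _ _ _ (A_deriv x)). Qed.

Lemma dA_continuous x : continuity_pt dA x.
Proof. apply HA. Qed.

Hypotheses (Hphi : is_cutoff phi) (Hre : admissible r e).

Lemma A_eq_sin x : 0 <= x <= r -> A x = sin x /\ dA x = cos x.
Proof.
  intros Hx. destruct HA as [A0 [dA0 _]]. destruct Hre as [_ [He _]].
  set (E := fun y => (A y - sin y) * (A y - sin y) + (dA y - cos y) * (dA y - cos y)).
  assert (HE : E x = E 0).
  { apply constant_of_deriv_zero; [lra | |].
    - intros y _. unfold E. pose proof (A_continuous y). pose proof (dA_continuous y). continuity_by_rules.
    - intros y Hy. pose proof (A_deriv y). pose proof (dA_deriv y ltac:(lra)) as DdA.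
      rewrite (Kpar_left Hphi) in DdA by lra. unfold E. derivative_by_rules. ring. }
  unfold E in HE. rewrite A0, dA0, sin_0, cos_0 in HE.
  pose proof (sqr_nonneg (A x - sin x)). pose proof (sqr_nonneg (dA x - cos x)).
  split; nra.
Qed.

Lemma wronskian_nonneg y : y < PI / 2 -> (forall z, r <= z < y -> 0 < A z) ->
  forall z, 0 <= z <= y -> 0 <= dA z * sin z - A z * cos z.
Proof.
  intros Hy Hpos z Hz. destruct HA as [A0 [dA0 _]]. destruct Hre as [r0 [e0 re]].
  enough (Hinc : 0 * (z - 0) <= (dA z * sin z - A z * cos z) - (dA 0 * sin 0 - A 0 * cos 0))
    by (rewrite A0, sin_0 in Hinc; lra).
  apply (increment_ge_of_deriv_ge (r :: nil) (fun t => dA t * sin t - A t * cos t)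
    (fun t => A t * sin t * (1 - Kpar phi r e t))).
  - lra.
  - intros t _. pose proof (A_continuous t). pose proof (dA_continuous t). continuity_by_rules.
  - intros t Ht Hn. assert (tr : t <> r) by (intro; apply Hn; simpl; auto).
    pose proof (A_deriv t). pose proof (dA_deriv t tr). split.
    + derivative_by_rules. ring.
    + pose proof (Kpar_bounds Hphi r e t).
      assert (0 < sin t) by (apply sin_pos_lt_PI2; lra).
      assert (0 <= A t).
      { destruct (Rle_dec t r); [rewrite (proj1 (A_eq_sin t ltac:(lra))); lra|].
        left; apply Hpos; lra. }
      apply Rmult_le_pos; [apply Rmult_le_pos|]; lra.
Qed.

(* Sturm comparison with [sin]: on [[r, y]] the quotient [A / sin] is nondecreasing. *)
Lemma sin_le_A y : r <= y < PI / 2 -> (forall z, r <= z < y -> 0 < A z) -> sin y <= A y.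
Proof.
  intros Hy Hpos. destruct Hre as [r0 [e0 re]].
  destruct (Req_dec y r) as [->|E]; [rewrite (proj1 (A_eq_sin r ltac:(lra))); lra|].
  assert (Hs : forall t, r <= t <= y -> 0 < sin t) by (intros; apply sin_pos_lt_PI2; lra).
  assert (H : 0 * (y - r) <= A y / sin y - A r / sin r).
  { apply (increment_ge_of_deriv_ge nil (fun z => A z / sin z)
      (fun z => (dA z * sin z - cos z * A z) / (sin z)²)).
    - lra.
    - intros t Ht. apply continuity_pt_div; [apply A_continuous | apply continuity_sin |].
      specialize (Hs t Ht). lra.
    - intros t Ht _. specialize (Hs t ltac:(lra)). split.
      + apply derivable_pt_lim_div; [apply A_deriv | apply derivable_pt_lim_sin | lra].
      + assert (0 <= dA t * sin t - A t * cos t) by (apply (wronskian_nonneg y); [lra | exact Hpos | lra]).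
        apply Rdiv_le_0_compat; [lra | unfold Rsqr; nra]. }
  rewrite (proj1 (A_eq_sin r ltac:(lra))) in H.
  pose proof (Hs r ltac:(lra)). pose proof (Hs y ltac:(lra)).
  replace (sin r / sin r) with 1 in H by (field; lra).
  replace (A y) with (A y / sin y * sin y) by (field; lra). nra.
Qed.

Lemma A_dA_pos_lt_PI2 y : r <= y < PI / 2 -> 0 < A y /\ 0 < dA y.
Proof.
  intros Hy. pose proof Hre as [r0 [e0 re]].
  assert (Hpos : forall z, r <= z <= y -> 0 < A z).
  { apply continuous_induction_pos; [lra | intros; apply A_continuous | |].
    - rewrite (proj1 (A_eq_sin r ltac:(lra))). apply sin_pos_lt_PI2; lra.
    - intros z Hz Hb. pose proof (sin_le_A z ltac:(lra) Hb).
      pose proof (sin_pos_lt_PI2 z ltac:(lra) ltac:(lra)). lra. }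
  assert (W := wronskian_nonneg y ltac:(lra) ltac:(intros; apply Hpos; lra) y ltac:(lra)).
  assert (0 < A y) by (apply Hpos; lra).
  pose proof (sin_pos_lt_PI2 y ltac:(lra) ltac:(lra)). pose proof (cos_pos_lt_PI2 y ltac:(lra) ltac:(lra)).
  split; nra.
Qed.

(* Beyond [r + e] the profile solves [A'' = A], so it is a combination of [exp] and [exp (- _)]
   with positive data at [r + e]. *)
Lemma A_dA_pos_beyond x : r + e <= x -> 0 < A x /\ 0 < dA x.
Proof.
  intros Hx. pose proof Hre as [r0 [e0 re]]. set (x0 := r + e).
  destruct (A_dA_pos_lt_PI2 x0 ltac:(unfold x0; lra)) as [a0 b0].
  destruct (hyperbolic_increments A dA x0 x Hx) as [S1 S2].
  - intros t _. split; [apply A_continuous | apply dA_continuous].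
  - intros t Ht. split; [apply A_deriv|].
    eapply derivable_pt_lim_eq; [apply dA_deriv; unfold x0 in Ht; lra|].
    rewrite (Kpar_right Hphi) by (unfold x0 in Ht; lra). ring.
  - assert (P1 : 1 <= exp (x - x0)) by (rewrite <- exp_0; apply exp_le_mono; unfold x0 in *; lra).
    assert (PQ : exp (x - x0) * exp (x0 - x) = 1)
      by (rewrite <- exp_plus; replace (x - x0 + (x0 - x)) with 0 by ring; apply exp_0).
    pose proof (exp_pos (x0 - x)).
    assert (Q1 : exp (x0 - x) <= 1) by nra.
    destruct (Rle_dec (A x0) (dA x0)); split; nra.
Qed.

Lemma A_pos x : 0 < x -> 0 < A x.
Proof.
  intros Hx. pose proof Hre as [r0 [e0 re]].
  destruct (Rle_dec x r); [rewrite (proj1 (A_eq_sin x ltac:(lra))); apply sin_pos_lt_PI2; lra|].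
  destruct (Rlt_dec x (PI / 2)); [apply A_dA_pos_lt_PI2 | apply A_dA_pos_beyond]; lra.
Qed.

Lemma dA_pos x : 0 <= x -> 0 < dA x.
Proof.
  intros Hx. pose proof Hre as [r0 [e0 re]].
  destruct (Rle_dec x r); [rewrite (proj2 (A_eq_sin x ltac:(lra))); apply cos_pos_lt_PI2; lra|].
  destruct (Rlt_dec x (PI / 2)); [apply A_dA_pos_lt_PI2 | apply A_dA_pos_beyond]; lra.
Qed.

Lemma A_nonneg x : 0 <= x -> 0 <= A x.
Proof.
  intros [Hx | <-]; [left; apply A_pos; exact Hx | destruct HA as [-> _]; lra].
Qed.

Lemma A_nondecreasing x y : 0 <= x <= y -> A x <= A y.
Proof.
  intros Hxy.
  enough (0 * (y - x) <= A y - A x) by lra.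
  apply (increment_ge_of_deriv_ge nil A dA); [lra | intros; apply A_continuous |].
  intros t Ht _. split; [apply A_deriv | left; apply dA_pos; lra].
Qed.

(* Energy estimate: [(A^2 + A'^2)' = 2 A A' (1 - K) <= 2 (A^2 + A'^2)] since [A, A' >= 0]. *)
Lemma A_dA_le_exp x : 0 <= x -> A x <= exp x /\ dA x <= exp x.
Proof.
  intros Hx. pose proof HA as [A0 [dA0 _]].
  set (E := fun z => A z * A z + dA z * dA z).
  assert (H : E x <= (E 0 + 0 * (x - 0)) * exp (2 * (x - 0))).
  { apply (gronwall (r :: nil) E
      (fun z => dA z * A z + A z * dA z + (- (Kpar phi r e z * A z) * dA z + dA z * - (Kpar phi r e z * A z))));
      [lra | lra | lra | |].
    - intros t _. unfold E. pose proof (A_continuous t). pose proof (dA_continuous t). continuity_by_rules.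
    - intros t Ht Hn. assert (tr : t <> r) by (intro; apply Hn; simpl; auto).
      pose proof (A_deriv t). pose proof (dA_deriv t tr). split.
      + unfold E. derivative_by_rules. ring.
      + pose proof (Kpar_bounds Hphi r e t).
        pose proof (A_nonneg t ltac:(lra)). pose proof (dA_pos t ltac:(lra)).
        unfold E. pose proof (sqr_nonneg (A t - dA t)). nra. }
  unfold E in H. rewrite A0, dA0 in H. replace (2 * (x - 0)) with (x + x) in H by ring.
  rewrite exp_plus in H.
  pose proof (A_nonneg x Hx). pose proof (dA_pos x Hx). pose proof (exp_pos x).
  split; nra.
Qed.

Lemma A_dA_lipschitz X x y : 0 <= x <= X -> 0 <= y <= X ->
  Rabs (A x - A y) <= exp X * Rabs (x - y) /\ Rabs (dA x - dA y) <= exp X * Rabs (x - y).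
Proof.
  intros Hx Hy. split.
  - apply (lipschitz_of_abs_deriv_le A dA _ 0 X); auto; [intros; apply A_continuous|].
    intros z Hz. split; [apply A_deriv|].
    destruct (A_dA_le_exp z ltac:(lra)) as [_ Q]. pose proof (dA_pos z ltac:(lra)).
    rewrite Rabs_right by lra. pose proof (exp_le_mono z X ltac:(lra)). lra.
  - assert (W : forall u v, 0 <= u <= v -> v <= X -> Rabs (dA v - dA u) <= exp X * (v - u)).
    { intros u v Huv HvX.
      apply (abs_increment_le_of_abs_deriv_le (r :: nil) dA (fun z => - (Kpar phi r e z * A z)));
        [lra | intros; apply dA_continuous |].
      intros z Hz Hn. assert (zr : z <> r) by (intro; apply Hn; simpl; auto).
      split; [apply dA_deriv; exact zr|].
      destruct (A_dA_le_exp z ltac:(lra)) as [Q _]. pose proof (A_nonneg z ltac:(lra)).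
      pose proof (Kpar_bounds Hphi r e z). pose proof (exp_le_mono z X ltac:(lra)).
      rewrite Rabs_Ropp, Rabs_mult, (Rabs_right (A z)) by lra.
      assert (Rabs (Kpar phi r e z) <= 1) by (apply Rabs_le; lra).
      pose proof (Rabs_pos (Kpar phi r e z)). nra. }
    destruct (Rle_dec x y).
    + rewrite Rabs_minus_sym, (Rabs_minus_sym x), (Rabs_right (y - x)) by lra. apply W; lra.
    + rewrite (Rabs_right (x - y)) by lra. apply W; lra.
Qed.

End Profile.

(** * Continuous dependence of [A] on [(r, e)] *)

Section TwoProfiles.
Context {phi : R -> R} {r e r0 e0 : R} {A dA A0 dA0 : R -> R}.
Hypotheses (Hphi : is_cutoff phi) (Hre0 : admissible r0 e0)
  (HA : is_A phi r e A dA) (HA0 : is_A phi r0 e0 A0 dA0).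

Let gap z := (A z - A0 z) * (A z - A0 z) + (dA z - dA0 z) * (dA z - dA0 z).
Let gap_rate z := 2 * (A z - A0 z) * (dA z - dA0 z) +
  2 * (dA z - dA0 z) * (Kpar phi r0 e0 z * A0 z - Kpar phi r e z * A z).

Lemma gap_deriv z : z <> r -> z <> r0 -> derivable_pt_lim gap z (gap_rate z).
Proof.
  intros n1 n2. pose proof (A_deriv HA z). pose proof (A_deriv HA0 z).
  pose proof (dA_deriv HA z n1). pose proof (dA_deriv HA0 z n2). unfold gap, gap_rate. derivative_by_rules. ring.
Qed.

Lemma gap_rate_le X z g : 0 <= z <= X -> Rabs (Kpar phi r e z - Kpar phi r0 e0 z) <= g ->
  gap_rate z <= 3 * gap z + exp X * exp X * (g * g).
Proof.
  intros Hz Hg. unfold gap_rate, gap. set (B := exp X).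
  set (k := Kpar phi r e z) in *. set (k0 := Kpar phi r0 e0 z) in *.
  assert (Kb := Kpar_bounds Hphi r e z). fold k in Kb.
  assert (a0p : 0 <= A0 z) by (apply (A_nonneg HA0 Hphi Hre0); lra).
  assert (a0b : A0 z <= B)
    by (destruct (A_dA_le_exp HA0 Hphi Hre0 z ltac:(lra)) as [Q _];
        pose proof (exp_le_mono z X ltac:(lra)); unfold B; lra).
  set (zA := A z - A0 z). set (zD := dA z - dA0 z).
  replace (k0 * A0 z - k * A z) with (- k * zA - (k - k0) * A0 z) by (unfold zA; ring).
  assert (g1 : (k - k0) * (k - k0) <= g * g)
    by (apply Rabs_le_between in Hg; assert (0 <= g) by lra; nra).
  assert (h1 : (k - k0) * A0 z * ((k - k0) * A0 z) <= B * B * (g * g)).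
  { assert (A0 z * A0 z <= B * B) by nra. pose proof (sqr_nonneg (k - k0)).
    pose proof (sqr_nonneg (A0 z)). nra. }
  assert (h2 : k * zA * (k * zA) <= zA * zA)
    by (assert (k * k <= 1) by nra; pose proof (sqr_nonneg zA); nra).
  pose proof (sqr_nonneg (zD - zA)). pose proof (sqr_nonneg (zD + k * zA)).
  pose proof (sqr_nonneg (zD + (k - k0) * A0 z)). nra.
Qed.

Lemma gap_gronwall X a b k : 0 <= a <= b -> b <= X -> 0 <= k ->
  (forall z, a < z < b -> gap_rate z <= 3 * gap z + k) ->
  gap b <= (gap a + k * (b - a)) * exp (3 * X).
Proof.
  intros Hab HbX Hk Hd.
  assert (H : gap b <= (gap a + k * (b - a)) * exp (3 * (b - a))).
  { apply (gronwall (r :: r0 :: nil) gap gap_rate); [lra | lra | exact Hk | |].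
    - intros z _. unfold gap. pose proof (A_continuous HA z). pose proof (A_continuous HA0 z).
      pose proof (dA_continuous HA z). pose proof (dA_continuous HA0 z). continuity_by_rules.
    - intros z Hz Hn. split; [apply gap_deriv | apply Hd; exact Hz];
        intro; apply Hn; simpl; auto. }
  pose proof (exp_le_mono (3 * (b - a)) (3 * X) ltac:(lra)).
  assert (0 <= gap a + k * (b - a)) by (unfold gap; pose proof (sqr_nonneg (A a - A0 a));
    pose proof (sqr_nonneg (dA a - dA0 a)); nra).
  eapply Rle_trans; [exact H | apply Rmult_le_compat_l; assumption].
Qed.

Lemma three_step_bound E P Q u : 1 <= u -> 0 <= P -> 0 <= Q ->
  (E <= P * u \/ E <= (P * u + Q) * u \/ E <= ((P * u + Q) * u + P) * u) ->
  E <= (2 * P + Q) * (u * u * u).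
Proof.
  intros Hu P0 Q0 HE.
  assert (u1 : u <= u * u) by nra. assert (u2 : u * u <= u * u * u) by nra.
  assert (P * u <= P * (u * u)) by (apply Rmult_le_compat_l; lra).
  assert (P * (u * u) <= P * (u * u * u)) by (apply Rmult_le_compat_l; lra).
  assert (Q * u <= Q * (u * u)) by (apply Rmult_le_compat_l; lra).
  assert (Q * (u * u) <= Q * (u * u * u)) by (apply Rmult_le_compat_l; lra).
  destruct HE as [Hx|[Hx|Hx]]; nra.
Qed.

(* The potentials differ by at most [gam] outside [[m, M]] and by at most [2] on it; three
   successive Gronwall estimates on [[0, m]], [[m, M]] and [[M, X]]. *)
Lemma profile_gap_le X m M gam : 0 <= X -> 0 <= m <= M -> 0 <= gam ->
  (forall x, 0 <= x <= X -> (x < m \/ M < x) -> Rabs (Kpar phi r e x - Kpar phi r0 e0 x) <= gam) ->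
  forall x, 0 <= x <= X ->
  (A x - A0 x) * (A x - A0 x) + (dA x - dA0 x) * (dA x - dA0 x) <=
    (2 * (exp X * exp X * (gam * gam)) * X + 4 * (exp X * exp X) * (M - m)) * exp (9 * X).
Proof.
  intros HX Hm Hg Hgood x Hx. match goal with |- _ <= ?b => change (gap x <= b) end.
  set (B := exp X).
  assert (gap0 : gap 0 = 0).
  { unfold gap. destruct HA as [-> [-> _]]. destruct HA0 as [-> [-> _]]. ring. }
  set (kg := B * B * (gam * gam)). set (kb := 4 * (B * B)).
  assert (kg0 : 0 <= kg) by (unfold kg; pose proof (sqr_nonneg gam); pose proof (sqr_nonneg B); nra).
  assert (kb0 : 0 <= kb) by (unfold kb; pose proof (sqr_nonneg B); nra).
  assert (Kb2 : forall z, Rabs (Kpar phi r e z - Kpar phi r0 e0 z) <= 2).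
  { intro z. pose proof (Kpar_bounds Hphi r e z). pose proof (Kpar_bounds Hphi r0 e0 z). apply Rabs_le; lra. }
  assert (e3ge : 1 <= exp (3 * X)) by (rewrite <- exp_0; apply exp_le_mono; lra).
  assert (e9 : exp (9 * X) = exp (3 * X) * exp (3 * X) * exp (3 * X))
    by (rewrite <- !exp_plus; f_equal; ring).
  set (mm := Rmin X m). set (MM := Rmin X M). set (e3 := exp (3 * X)) in *.
  assert (Fm : 0 <= mm <= MM /\ MM <= X /\ MM - mm <= M - m /\ mm <= m /\ (MM = M \/ MM = X)).
  { unfold mm, MM, Rmin. destruct (Rle_dec X m); destruct (Rle_dec X M); lra. }
  destruct Fm as [F1 [F2 [F3 [F4 F5]]]].
  assert (Hm1 : forall z, 0 <= z <= mm -> gap z <= kg * X * e3).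
  { intros z Hz. eapply Rle_trans; [apply (gap_gronwall X 0 z kg); [lra | lra | exact kg0 |] |].
    - intros t Ht. apply gap_rate_le; [lra | apply Hgood; lra].
    - rewrite gap0, Rplus_0_l. apply Rmult_le_compat_r; [unfold e3; left; apply exp_pos|].
      apply Rmult_le_compat_l; lra. }
  assert (Hm2 : forall z, mm <= z <= MM -> gap z <= (kg * X * e3 + kb * (M - m)) * e3).
  { intros z Hz. eapply Rle_trans; [apply (gap_gronwall X mm z kb); [lra | lra | exact kb0 |] |].
    - intros t Ht. unfold kb. replace (4 * (B * B)) with (B * B * (2 * 2)) by ring.
      apply gap_rate_le; [lra | apply Kb2].
    - apply Rmult_le_compat_r; [unfold e3; left; apply exp_pos|].
      assert (gap mm <= kg * X * e3) by (apply Hm1; lra).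
      assert (kb * (z - mm) <= kb * (M - m)) by (apply Rmult_le_compat_l; lra). lra. }
  assert (Hm3 : forall z, MM <= z <= X -> gap z <= ((kg * X * e3 + kb * (M - m)) * e3 + kg * X) * e3).
  { intros z Hz. eapply Rle_trans; [apply (gap_gronwall X MM z kg); [lra | lra | exact kg0 |] |].
    - intros t Ht. apply gap_rate_le; [lra | apply Hgood; [lra | right; destruct F5; lra]].
    - apply Rmult_le_compat_r; [unfold e3; left; apply exp_pos|].
      assert (gap MM <= (kg * X * e3 + kb * (M - m)) * e3) by (apply Hm2; lra).
      assert (kg * (z - MM) <= kg * X) by (apply Rmult_le_compat_l; lra). lra. }
  rewrite e9. replace (2 * kg * X) with (2 * (kg * X)) by ring.
  apply three_step_bound; [exact e3ge | apply Rmult_le_pos; lra | apply Rmult_le_pos; lra |].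
  assert (x <= mm \/ mm <= x <= MM \/ MM <= x) as [C|[C|C]] by lra.
  - left; apply Hm1; lra.
  - right; left; apply Hm2; lra.
  - right; right; apply Hm3; lra.
Qed.

End TwoProfiles.

Definition clamp01 u := Rmax 0 (Rmin 1 u).

Lemma clamp01_bounds u : 0 <= clamp01 u <= 1.
Proof. unfold clamp01, Rmax, Rmin. destruct (Rle_dec 1 u); destruct (Rle_dec 0 _); lra. Qed.

Lemma clamp01_contracting u v : Rabs (clamp01 u - clamp01 v) <= Rabs (u - v).
Proof.
  unfold clamp01, Rmax, Rmin. apply Rabs_le.
  destruct (Rabs_le_between (u - v) (Rabs (u - v))) as [H _]. specialize (H (Rle_refl _)).
  destruct (Rle_dec 1 u); destruct (Rle_dec 1 v); repeat destruct (Rle_dec 0 _); lra.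
Qed.

Lemma smooth_continuous f : smooth f -> forall x, continuity_pt f x.
Proof. intros [D [D0 HD]] x. rewrite <- D0. apply (derivable_pt_lim_continuity_pt _ _ _ (HD O x)). Qed.

Section Cutoff.
Context {phi : R -> R} (Hphi : is_cutoff phi) (Hsmooth : smooth phi).

Lemma cutoff_clamp01 u : phi u = phi (clamp01 u).
Proof.
  destruct Hphi as [_ [H0 H1]]. unfold clamp01, Rmax, Rmin. destruct (Rle_dec 1 u).
  - destruct (Rle_dec 0 1); [rewrite !H1; lra | lra].
  - destruct (Rle_dec 0 u); [reflexivity | rewrite !H0; lra].
Qed.

(* [phi] is constant off [[0, 1]], so Heine's theorem on [[0, 1]] suffices. *)
Lemma cutoff_uniformly_continuous g : 0 < g ->
  exists h, 0 < h /\ forall u v, Rabs (u - v) < h -> Rabs (phi u - phi v) < g.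
Proof.
  intros Hg.
  destruct (Heine_cor2 (a := 0) (b := 1) (fun x _ => smooth_continuous phi Hsmooth x) (mkposreal g Hg))
    as [d Hd].
  exists d. split; [apply cond_pos|]. intros u v Huv.
  rewrite (cutoff_clamp01 u), (cutoff_clamp01 v).
  apply Hd; [apply clamp01_bounds | apply clamp01_bounds |].
  eapply Rle_lt_trans; [apply clamp01_contracting | exact Huv].
Qed.

Lemma rescaled_close r0 e0 X h : 0 <= r0 -> 0 < e0 -> 0 <= X -> 0 < h ->
  exists del, 0 < del /\ forall r e x, Rabs (r - r0) < del -> Rabs (e - e0) < del -> 0 <= x <= X ->
    Rabs ((x - r) / e - (x - r0) / e0) < h.
Proof.
  intros Hr0 He0 HX Hh. set (C := X + r0 + e0).
  exists (Rmin (e0 / 2) (h * (e0 * e0) / (2 * C + 1))).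
  split; [apply Rmin_glb_lt; [lra | apply Rdiv_lt_0_compat; [apply Rmult_lt_0_compat; nra | unfold C; lra]]|].
  intros r e x Hr He Hx.
  assert (d1 := Rlt_le_trans _ _ _ He (Rmin_l _ _)).
  assert (d2 := Rlt_le_trans _ _ _ He (Rmin_r _ _)).
  assert (d3 := Rlt_le_trans _ _ _ Hr (Rmin_r _ _)).
  set (del := h * (e0 * e0) / (2 * C + 1)) in *.
  assert (Hdel : del * (2 * C + 1) = h * (e0 * e0)) by (unfold del; field; unfold C; lra).
  apply Rabs_lt_between in d1.
  assert (Hee : e0 * e0 / 2 < e * e0) by nra.
  replace ((x - r) / e - (x - r0) / e0) with (((x - r0) * (e0 - e) + e0 * (r0 - r)) / (e * e0))
    by (field; lra).
  rewrite Rabs_div by nra. rewrite (Rabs_right (e * e0)) by nra.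
  apply Rlt_div_l; [nra|].
  assert (N : Rabs ((x - r0) * (e0 - e) + e0 * (r0 - r)) <= C * del).
  { eapply Rle_trans; [apply Rabs_triang|]. rewrite !Rabs_mult.
    rewrite (Rabs_right e0), (Rabs_minus_sym e0 e), (Rabs_minus_sym r0 r) by lra.
    assert (Rabs (x - r0) <= X + r0) by (apply Rabs_le; lra).
    pose proof (Rabs_pos (x - r0)). pose proof (Rabs_pos (e - e0)).
    assert (Rabs (x - r0) * Rabs (e - e0) <= (X + r0) * del) by (apply Rmult_le_compat; lra).
    assert (e0 * Rabs (r - r0) <= e0 * del) by (apply Rmult_le_compat_l; lra).
    unfold C. lra. }
  assert (0 < del) by (pose proof (Rabs_pos (r - r0)); lra).
  assert (h * (e0 * e0 / 2) < h * (e * e0)) by (apply Rmult_lt_compat_l; lra).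
  unfold C in *. nra.
Qed.

(* Near [(r0, e0)] the potentials differ by at most [gam] outside an interval of length at
   most [gam]: for [e0 = 0] they coincide outside the transition region, for [e0 > 0] they
   are uniformly close. *)
Lemma Kpar_close r0 e0 X gam : admissible r0 e0 -> 0 <= X -> 0 < gam ->
  exists del, 0 < del /\ forall r e, admissible r e -> Rabs (r - r0) < del -> Rabs (e - e0) < del ->
    exists m M, 0 <= m <= M /\ M - m <= gam /\
      forall x, 0 <= x <= X -> (x < m \/ M < x) -> Rabs (Kpar phi r e x - Kpar phi r0 e0 x) <= gam.
Proof.
  intros Hre0 HX Hgam. pose proof Hre0 as [r00 [e00 re0]].
  destruct (Req_dec e0 0) as [E0|E0].
  - exists (gam / 2). split; [lra|]. intros r e [r1 [e1 re1]] Hr He.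
    rewrite E0, Rminus_0_r in He. apply Rabs_lt_between in Hr. apply Rabs_lt_between in He.
    exists (Rmin r r0), (Rmax r r0 + e).
    pose proof (Rmin_l r r0). pose proof (Rmin_r r r0). pose proof (Rmax_l r r0). pose proof (Rmax_r r r0).
    split; [split; [apply Rmin_glb|]; lra|]. split.
    + unfold Rmin, Rmax; destruct (Rle_dec r r0); lra.
    + intros x Hx [C|C].
      * rewrite (Kpar_left Hphi r e x), (Kpar_left Hphi r0 e0 x) by lra.
        rewrite Rminus_diag, Rabs_R0; lra.
      * rewrite (Kpar_right Hphi r e x), (Kpar_right Hphi r0 e0 x) by lra.
        rewrite Rminus_diag, Rabs_R0; lra.
  - destruct (cutoff_uniformly_continuous (gam / 2)) as [h [h0 Hh]]; [lra|].
    destruct (rescaled_close r0 e0 X h) as [d [d0 Hd]]; [lra | lra | exact HX | exact h0|].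
    exists (Rmin d (e0 / 2)). split; [apply Rmin_glb_lt; lra|].
    intros r e Hre Hr He. pose proof (Rmin_l d (e0 / 2)). pose proof (Rmin_r d (e0 / 2)).
    assert (ep : e0 / 2 < e) by (apply Rabs_lt_between in He; lra).
    exists 0, 0. split; [lra|]. split; [lra|].
    intros x Hx _. unfold Kpar.
    destruct (Req_EM_T e 0) as [Q|_]; [lra|]. destruct (Req_EM_T e0 0) as [Q|_]; [lra|].
    replace (1 - 2 * phi ((x - r) / e) - (1 - 2 * phi ((x - r0) / e0)))
      with (- 2 * (phi ((x - r) / e) - phi ((x - r0) / e0))) by ring.
    rewrite Rabs_mult, Rabs_left by lra.
    enough (Rabs (phi ((x - r) / e) - phi ((x - r0) / e0)) < gam / 2) by lra.
    apply Hh, Hd; lra.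
Qed.

Lemma A_close r0 e0 X eps : admissible r0 e0 -> 0 <= X -> 0 < eps ->
  exists del, 0 < del /\
  forall r e A dA A0 dA0, admissible r e -> Rabs (r - r0) < del -> Rabs (e - e0) < del ->
    is_A phi r e A dA -> is_A phi r0 e0 A0 dA0 ->
    forall x, 0 <= x <= X -> Rabs (A x - A0 x) <= eps /\ Rabs (dA x - dA0 x) <= eps.
Proof.
  intros Hre0 HX Heps.
  set (B := exp X). set (e9 := exp (9 * X)).
  assert (B0 : 0 < B) by apply exp_pos. assert (e90 : 0 < e9) by apply exp_pos.
  set (Z := (2 * (B * B) * X + 4 * (B * B)) * e9).
  assert (Z0 : 0 <= Z) by (unfold Z; apply Rmult_le_pos; nra).
  set (gam := Rmin 1 (eps * eps / (Z + 1))).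
  assert (g0 : 0 < gam) by (apply Rmin_glb_lt; [lra | apply Rdiv_lt_0_compat; nra]).
  assert (g1 : gam <= 1) by apply Rmin_l.
  assert (gZ : gam * Z <= eps * eps).
  { assert (Hg : gam <= eps * eps / (Z + 1)) by apply Rmin_r.
    apply Rle_div_r in Hg; [nra | lra]. }
  destruct (Kpar_close r0 e0 X gam Hre0 HX g0) as [del [d0 Hdel]].
  exists del. split; [exact d0|]. intros r e A dA A0 dA0 Hre Hr He HA HA0 x Hx.
  destruct (Hdel r e Hre Hr He) as [m [M [Hm [HMm HK]]]].
  pose proof (profile_gap_le Hphi Hre0 HA HA0 X m M gam HX Hm ltac:(lra) HK x Hx) as H.
  fold B e9 in H.
  assert (Hb : (2 * (B * B * (gam * gam)) * X + 4 * (B * B) * (M - m)) * e9 <= eps * eps).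
  { assert (gam * gam <= gam) by nra.
    assert (2 * (B * B * (gam * gam)) * X <= 2 * (B * B) * X * gam).
    { assert (0 <= 2 * (B * B) * X) by nra. nra. }
    assert (4 * (B * B) * (M - m) <= 4 * (B * B) * gam) by (apply Rmult_le_compat_l; nra).
    unfold Z in gZ. nra. }
  pose proof (sqr_nonneg (A x - A0 x)). pose proof (sqr_nonneg (dA x - dA0 x)).
  split; apply Rabs_le_of_sqr_le; lra.
Qed.

End Cutoff.

(** * The geodesics [rho] *)

Lemma sin_le_id x : 0 <= x -> sin x <= x.
Proof. intros [H | <-]; [left; apply sin_lt_x; exact H | rewrite sin_0; lra]. Qed.

Lemma one_sub_half_sqr_le_cos x : 0 <= x -> 1 - x * x / 2 <= cos x.
Proof.
  intros Hx.
  enough (Hinc : 0 * (x - 0) <= (cos x - 1 + x * x / 2) - (cos 0 - 1 + 0 * 0 / 2))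
    by (rewrite cos_0 in Hinc; lra).
  apply (increment_ge_of_deriv_ge nil (fun y => cos y - 1 + y * y / 2) (fun y => - sin y + y));
    [lra | intros; unfold Rdiv; continuity_by_rules |].
  intros z Hz _. split; [unfold Rdiv; derivative_by_rules; field | pose proof (sin_le_id z); lra].
Qed.

Lemma half_le_sin x : 0 <= x <= 1 -> x / 2 <= sin x.
Proof.
  intros Hx.
  enough (Hinc : 0 * (x - 0) <= (sin x - x / 2) - (sin 0 - 0 / 2)) by (rewrite sin_0 in Hinc; lra).
  apply (increment_ge_of_deriv_ge nil (fun y => sin y - y / 2) (fun y => cos y - 1 / 2));
    [lra | intros; unfold Rdiv; continuity_by_rules |].
  intros z Hz _. split; [unfold Rdiv; derivative_by_rules; field | pose proof (one_sub_half_sqr_le_cos z); nra].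
Qed.

Lemma increment_ge_of_second_deriv_ge f df ddf k a b : a <= b ->
  (forall x, a <= x <= b -> derivable_pt_lim f x (df x) /\ derivable_pt_lim df x (ddf x) /\ k <= ddf x) ->
  df a * (b - a) + k * (b - a) * (b - a) / 2 <= f b - f a.
Proof.
  intros ab Hd.
  assert (Hdf : forall x, a <= x <= b -> k * (x - a) <= df x - df a).
  { intros x Hx. apply (increment_ge_of_deriv_ge nil df ddf); [lra | |].
    - intros y Hy. destruct (Hd y ltac:(lra)) as [_ [D _]]. exact (derivable_pt_lim_continuity_pt _ _ _ D).
    - intros y Hy _. destruct (Hd y ltac:(lra)) as [_ [D K]]. auto. }
  enough (0 * (b - a) <= (f b - df a * b - k * (b - a) * (b - a) / 2) - (f a - df a * a - k * (a - a) * (a - a) / 2))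
    by lra.
  apply (increment_ge_of_deriv_ge nil (fun y => f y - df a * y - k * (y - a) * (y - a) / 2)
    (fun y => df y - df a - k * (y - a))); [exact ab | |].
  - intros y Hy. destruct (Hd y Hy) as [D _]. pose proof (derivable_pt_lim_continuity_pt _ _ _ D).
    unfold Rdiv. continuity_by_rules.
  - intros y Hy _. destruct (Hd y ltac:(lra)) as [D _]. split.
    + unfold Rdiv. derivative_by_rules. field.
    + specialize (Hdf y ltac:(lra)). lra.
Qed.

Section Geodesic.
Context {phi : R -> R} {r e : R} {A dA : R -> R} {s : R} {rho drho ddrho : R -> R}.
Hypotheses (HA : is_A phi r e A dA) (Hphi : is_cutoff phi) (Hre : admissible r e)
  (Hs : 0 < s) (Hrho : is_rho A dA s rho drho ddrho).

Lemma rho_deriv t : 0 <= t -> derivable_pt_lim rho t (drho t).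
Proof. apply Hrho. Qed.

Lemma drho_deriv t : 0 <= t -> derivable_pt_lim drho t (ddrho t).
Proof. apply Hrho. Qed.

Lemma rho_init : rho 0 = s /\ drho 0 = 0.
Proof. destruct Hrho as [_ [_ [H _]]]. destruct (H Hs) as [H1 [H2 _]]. auto. Qed.

Lemma rho_ode t : 0 <= t -> ddrho t = dA (rho t) / A (rho t) * (1 - drho t * drho t).
Proof. destruct Hrho as [_ [_ [H _]]]. intros. rewrite (proj2 (proj2 (H Hs)) t) by auto. simpl. ring. Qed.

(* Clairaut's first integral; the lower bound on [rho] keeps [A (rho)] positive, so that the
   geodesic equation can be divided by it. *)
Lemma clairaut_until y : 0 <= y -> (forall x, 0 <= x < y -> s / 2 < rho x) ->
  (forall x, 0 <= x <= y -> (1 - drho x * drho x) * (A (rho x) * A (rho x)) = A s * A s) /\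
  (forall x, 0 <= x <= y -> 0 <= drho x) /\
  (forall x, 0 <= x <= y -> s <= rho x).
Proof.
  intros Hy Hb. destruct rho_init as [r0 v0].
  set (Q := fun x => (1 - drho x * drho x) * (A (rho x) * A (rho x))).
  assert (DAr : forall x, 0 <= x -> derivable_pt_lim (fun t => A (rho t)) x (dA (rho x) * drho x))
    by (intros x Hx; apply (derivable_pt_lim_comp rho A); [apply rho_deriv; exact Hx | apply (A_deriv HA)]).
  assert (HQ : forall x, 0 <= x <= y -> Q x = A s * A s).
  { intros x Hx. replace (A s * A s) with (Q 0) by (unfold Q; rewrite r0, v0; ring).
    apply constant_of_deriv_zero; [lra | |].
    - intros z Hz. unfold Q. pose proof (derivable_pt_lim_continuity_pt _ _ _ (drho_deriv z ltac:(lra))).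
      pose proof (derivable_pt_lim_continuity_pt _ _ _ (DAr z ltac:(lra))). continuity_by_rules.
    - intros z Hz. assert (0 < A (rho z)) by (apply (A_pos HA Hphi Hre); specialize (Hb z ltac:(lra)); lra).
      pose proof (DAr z ltac:(lra)). pose proof (drho_deriv z ltac:(lra)). unfold Q. derivative_by_rules.
      rewrite rho_ode by lra. field. lra. }
  assert (Hdd : forall z, 0 < z < y -> 0 <= ddrho z).
  { intros z Hz. specialize (Hb z ltac:(lra)).
    assert (0 < A (rho z)) by (apply (A_pos HA Hphi Hre); lra).
    assert (0 < dA (rho z)) by (apply (dA_pos HA Hphi Hre); lra).
    assert (0 < A s) by (apply (A_pos HA Hphi Hre); lra).
    assert (HQz := HQ z ltac:(lra)). unfold Q in HQz.
    assert (0 < 1 - drho z * drho z) by (destruct (Rle_dec (1 - drho z * drho z) 0); nra).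
    rewrite rho_ode by lra. apply Rmult_le_pos; [left; apply Rdiv_lt_0_compat|]; lra. }
  assert (Hv : forall x, 0 <= x <= y -> 0 <= drho x).
  { intros x Hx. enough (0 * (x - 0) <= drho x - drho 0) by lra.
    apply (increment_ge_of_deriv_ge nil drho ddrho); [lra | |].
    - intros z Hz. exact (derivable_pt_lim_continuity_pt _ _ _ (drho_deriv z ltac:(lra))).
    - intros z Hz _. split; [apply drho_deriv; lra | apply Hdd; lra]. }
  split; [exact HQ | split; [exact Hv|]].
  intros x Hx. enough (0 * (x - 0) <= rho x - rho 0) by lra.
  apply (increment_ge_of_deriv_ge nil rho drho); [lra | |].
  - intros z Hz. exact (derivable_pt_lim_continuity_pt _ _ _ (rho_deriv z ltac:(lra))).
  - intros z Hz _. split; [apply rho_deriv; lra | apply Hv; lra].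
Qed.

Lemma rho_clairaut_bounds t : 0 <= t ->
  s <= rho t /\ 0 <= drho t <= 1 /\
  (1 - drho t * drho t) * (A (rho t) * A (rho t)) = A s * A s.
Proof.
  intros Ht. destruct rho_init as [r0 v0].
  assert (Hpos : forall x, 0 <= x <= t + 1 -> 0 < rho x - s / 2).
  { apply continuous_induction_pos; [lra | | rewrite r0; lra |].
    - intros x Hx. pose proof (derivable_pt_lim_continuity_pt _ _ _ (rho_deriv x ltac:(lra))). continuity_by_rules.
    - intros y Hy Hb. destruct (clairaut_until y ltac:(lra)) as [_ [_ H3]].
      + intros x Hx. specialize (Hb x Hx). lra.
      + specialize (H3 y ltac:(lra)). lra. }
  destruct (clairaut_until (t + 1) ltac:(lra)) as [H1 [H2 H3]].
  { intros x Hx. specialize (Hpos x ltac:(lra)). lra. }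
  specialize (H1 t ltac:(lra)). specialize (H2 t ltac:(lra)). specialize (H3 t ltac:(lra)).
  assert (0 < A (rho t)) by (apply (A_pos HA Hphi Hre); lra).
  repeat split; auto.
  destruct (Rle_dec (drho t) 1) as [|n]; auto.
  assert ((1 - drho t * drho t) * (A (rho t) * A (rho t)) < 0) by (apply Rmult_neg_pos; nra).
  pose proof (sqr_nonneg (A s)). lra.
Qed.

Lemma rho_monotone_slow t1 t2 : 0 <= t1 <= t2 -> rho t1 <= rho t2 /\ rho t2 - rho t1 <= t2 - t1.
Proof.
  intros Ht.
  assert (Hc : forall z, t1 <= z <= t2 -> continuity_pt rho z)
    by (intros z Hz; exact (derivable_pt_lim_continuity_pt _ _ _ (rho_deriv z ltac:(lra)))).
  split.
  - enough (0 * (t2 - t1) <= rho t2 - rho t1) by lra.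
    apply (increment_ge_of_deriv_ge nil rho drho); [lra | exact Hc |].
    intros z Hz _. split; [apply rho_deriv; lra | apply rho_clairaut_bounds; lra].
  - enough (rho t2 - rho t1 <= 1 * (t2 - t1)) by lra.
    apply (increment_le_of_deriv_le nil rho drho); [lra | exact Hc |].
    intros z Hz _. split; [apply rho_deriv; lra | apply rho_clairaut_bounds; lra].
Qed.

(* For small [s], within time [16 s m^2] the geodesic climbs from [s] to [s m]: while
   [rho < s m <= r] we have [A = sin] and [rho'' = cos rho sin^2 s / sin^3 rho >= 1 / (8 s m^3)]. *)
Lemma rho_reaches m : 1 <= m -> s * m <= r -> s * m <= 1 -> s * m <= rho (16 * s * (m * m)).
Proof.
  intros Hm Har Ha1. pose proof Hre as [r0 [e0 re]]. pose proof PI2_1.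
  set (a := s * m) in *. set (tau := 16 * s * (m * m)).
  destruct (Rle_dec a (rho tau)) as [|N]; [assumption|]. exfalso.
  assert (sa : s <= a) by (unfold a; nra).
  set (kap := / (8 * s * (m * m * m))).
  assert (kp : 0 < kap) by (unfold kap; apply Rinv_0_lt_compat; repeat apply Rmult_lt_0_compat; lra).
  assert (Hdd : forall z, 0 <= z <= tau -> kap <= ddrho z).
  { intros z Hz. destruct (rho_clairaut_bounds z ltac:(lra)) as [B1 [_ B3]].
    destruct (rho_monotone_slow z tau ltac:(lra)) as [M1 _].
    destruct (A_eq_sin HA Hphi Hre (rho z) ltac:(lra)) as [E1 E2].
    destruct (A_eq_sin HA Hphi Hre s ltac:(lra)) as [E3 _].
    assert (B4 := rho_ode z ltac:(lra)).
    rewrite E1, E2 in B4. rewrite E1, E3 in B3.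
    assert (Sp : 0 < sin (rho z)) by (apply sin_pos_lt_PI2; lra).
    assert (Sle : sin (rho z) <= a) by (pose proof (sin_le_id (rho z) ltac:(lra)); lra).
    assert (Cge : 1 / 2 <= cos (rho z)) by (pose proof (one_sub_half_sqr_le_cos (rho z) ltac:(lra)); nra).
    assert (sins : s / 2 <= sin s) by (apply half_le_sin; lra).
    set (S := sin (rho z)) in *. set (c := cos (rho z)) in *.
    assert (K1 : ddrho z * (S * S * S) = c * (sin s * sin s)) by (rewrite B4, <- B3; field; lra).
    assert (K2 : kap * (S * S * S) <= kap * (a * a * a)).
    { apply Rmult_le_compat_l; [lra|]. assert (S * S <= a * a) by nra. nra. }
    assert (K3 : kap * (a * a * a) = s * s / 8) by (unfold kap, a; field; nra).
    assert (K4 : s * s / 8 <= c * (sin s * sin s)) by (assert (s * s / 4 <= sin s * sin s) by nra; nra).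
    assert (S3 : 0 < S * S * S) by (repeat apply Rmult_lt_0_compat; lra).
    apply (Rmult_le_reg_r (S * S * S)); [exact S3 | lra]. }
  assert (Hgain := increment_ge_of_second_deriv_ge rho drho ddrho kap 0 tau ltac:(unfold tau; nra)).
  destruct rho_init as [r00 v00]. rewrite r00, v00 in Hgain.
  assert (kap * (tau - 0) * (tau - 0) / 2 = 16 * a) by (unfold kap, tau, a; field; nra).
  enough (0 * (tau - 0) + kap * (tau - 0) * (tau - 0) / 2 <= rho tau - s) by lra.
  apply Hgain. intros x Hx. split; [apply rho_deriv; lra | split; [apply drho_deriv; lra | apply Hdd; lra]].
Qed.

(* Clairaut's relation with [A(rho) >= sin h >= h / 2] and [A(s) = sin s <= s]. *)
Lemma one_sub_drho_sqr_le h z : s <= r -> 0 < h -> h <= r -> h <= 1 -> 0 <= z -> h <= rho z ->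
  1 - drho z * drho z <= 4 * (s * s) / (h * h).
Proof.
  intros Hsr Hh Hhr Hh1 Hz Hrz. pose proof Hre as [r0 [e0 re]].
  destruct (rho_clairaut_bounds z Hz) as [C1 [C2 C3]].
  assert (Ah : sin h <= A (rho z)).
  { destruct (A_eq_sin HA Hphi Hre h ltac:(lra)) as [Q _]. rewrite <- Q.
    apply (A_nondecreasing HA Hphi Hre). lra. }
  pose proof (half_le_sin h ltac:(lra)).
  destruct (A_eq_sin HA Hphi Hre s ltac:(lra)) as [E3 _]. rewrite E3 in C3.
  pose proof (sin_le_id s ltac:(lra)). pose proof (sin_pos_lt_PI2 s ltac:(lra) ltac:(lra)).
  apply Rle_div_r; [nra|].
  destruct (Rle_dec 0 (1 - drho z * drho z)); [|nra].
  assert (h * h <= 4 * (A (rho z) * A (rho z))) by nra.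
  assert ((1 - drho z * drho z) * (h * h) <= (1 - drho z * drho z) * (4 * (A (rho z) * A (rho z))))
    by (apply Rmult_le_compat_l; lra).
  nra.
Qed.

Lemma geodesic_time_continuous t0 eps : 0 <= t0 -> 0 < eps -> exists d, 0 < d /\
  forall t, 0 <= t -> Rabs (t - t0) < d ->
  Rabs (rho t - rho t0) < eps /\ Rabs (drho t - drho t0) < eps /\ Rabs (ddrho t - ddrho t0) < eps.
Proof.
  intros Ht0 Heps.
  pose proof (derivable_pt_lim_continuity_pt _ _ _ (rho_deriv t0 Ht0)) as Cr.
  pose proof (derivable_pt_lim_continuity_pt _ _ _ (drho_deriv t0 Ht0)) as Cv.
  assert (0 < A (rho t0)) by (apply (A_pos HA Hphi Hre); destruct (rho_clairaut_bounds t0 Ht0); lra).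
  assert (Cdd : continuity_pt (fun t => dA (rho t) / A (rho t) * (1 - drho t * drho t)) t0).
  { apply continuity_pt_mult; [apply continuity_pt_div; [| | lra] | continuity_by_rules];
      apply (continuity_pt_comp rho); auto; [apply (dA_continuous HA) | apply (A_continuous HA)]. }
  destruct (continuity_pt_ball _ _ eps Cr Heps) as [d1 [d1p H1]].
  destruct (continuity_pt_ball _ _ eps Cv Heps) as [d2 [d2p H2]].
  destruct (continuity_pt_ball _ _ eps Cdd Heps) as [d3 [d3p H3]].
  exists (Rmin d1 (Rmin d2 d3)). split; [repeat apply Rmin_glb_lt; lra|].
  intros t Ht Dt. apply Rmin_Rgt in Dt as [D1 D23]. apply Rmin_Rgt in D23 as [D2 D3].
  rewrite !rho_ode by lra. auto.
Qed.

Lemma geodesic_flat_estimates h t : s <= r -> 0 < h -> h <= r -> h <= 1 -> 0 <= t -> h <= rho t ->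
  Rabs (drho t - 1) <= 4 * (s * s) / (h * h) /\
  Rabs (ddrho t) <= 8 * exp (rho t) * (s * s) / (h * h * h).
Proof.
  intros Hsr Hh Hhr Hh1 Ht Hrt.
  pose proof (one_sub_drho_sqr_le h t Hsr Hh Hhr Hh1 Ht Hrt) as W.
  destruct (rho_clairaut_bounds t Ht) as [_ [Hv _]].
  set (x := rho t) in *. set (v := drho t) in *.
  split; [rewrite Rabs_left1 by lra; nra|].
  assert (Ax : h / 2 <= A x).
  { destruct (A_eq_sin HA Hphi Hre h ltac:(lra)) as [E1 _].
    pose proof (A_nondecreasing HA Hphi Hre h x ltac:(lra)). pose proof (half_le_sin h ltac:(lra)). lra. }
  destruct (A_dA_le_exp HA Hphi Hre x ltac:(lra)) as [_ dx]. pose proof (dA_pos HA Hphi Hre x ltac:(lra)).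
  rewrite (rho_ode t Ht). fold x v.
  assert (w0 : 0 <= 1 - v * v) by nra.
  rewrite Rabs_right by (apply Rle_ge, Rmult_le_pos; [left; apply Rdiv_lt_0_compat|]; lra).
  apply Rle_trans with (exp x / (h / 2) * (4 * (s * s) / (h * h))).
  - apply Rmult_le_compat; [left; apply Rdiv_lt_0_compat; lra | lra | | exact W].
    unfold Rdiv. apply Rmult_le_compat; [lra | left; apply Rinv_0_lt_compat; lra | lra |].
    apply Rinv_le_contravar; lra.
  - right. field. lra.
Qed.

End Geodesic.

(* As [s -> 0] the geodesic converges to the ray [rho = t], uniformly for [t] in [[0, T]] and
   for [r] bounded below: take [m = 1 + 8 T / eps] in [rho_reaches], and [h = s m] in
   [one_sub_drho_sqr_le] afterwards. *)
Lemma rho_close_to_id phi rm : is_cutoff phi -> 0 < rm <= 1 -> forall T eps, 0 <= T -> 0 < eps ->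
  exists del, 0 < del /\ forall r e A dA s rho drho ddrho, admissible r e -> rm <= r ->
  is_A phi r e A dA -> 0 < s < del -> is_rho A dA s rho drho ddrho ->
  forall t, 0 <= t <= T -> Rabs (rho t - t) <= eps.
Proof.
  intros Hphi Hrm T eps HT Heps.
  set (m := 1 + 8 * T / eps).
  assert (m1 : 1 <= m) by (unfold m; assert (0 <= 8 * T / eps) by (apply Rdiv_le_0_compat; lra); lra).
  assert (Hm : 4 * T / (m * m) <= eps / 2).
  { assert (m * eps = eps + 8 * T) by (unfold m; field; lra).
    apply Rle_div_l; [nra | nra]. }
  exists (Rmin (rm / m) (eps / (32 * (m * m)))).
  split; [apply Rmin_glb_lt; apply Rdiv_lt_0_compat; nra|].
  intros r e A dA s rho drho ddrho Hre Hr HA Hs Hrho t Ht.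
  assert (sm : s * m <= rm).
  { assert (Hsm : s <= rm / m) by (pose proof (Rmin_l (rm / m) (eps / (32 * (m * m)))); lra).
    apply Rle_div_r in Hsm; lra. }
  set (tau := 16 * s * (m * m)).
  assert (taue : tau < eps / 2).
  { assert (Hse : s < eps / (32 * (m * m))) by (pose proof (Rmin_r (rm / m) (eps / (32 * (m * m)))); lra).
    apply Rlt_div_r in Hse; [unfold tau; lra | nra]. }
  assert (Hs0 : 0 < s) by lra.
  assert (Hreach := rho_reaches HA Hphi Hre Hs0 Hrho m m1 ltac:(lra) ltac:(lra)). fold tau in Hreach.
  destruct (rho_init Hs0 Hrho) as [r00 _].
  destruct (rho_monotone_slow HA Hphi Hre Hs0 Hrho 0 t ltac:(lra)) as [M1 M2]. rewrite r00 in M1, M2.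
  assert (sle : s <= tau) by (unfold tau; assert (1 <= m * m) by nra; nra).
  apply Rabs_le. split; [|lra].
  destruct (Rle_dec t tau) as [C|C]; [lra|].
  assert ((1 - 4 / (m * m)) * (t - tau) <= rho t - rho tau).
  { apply (increment_ge_of_deriv_ge nil rho drho); [lra | |].
    - intros y Hy. exact (derivable_pt_lim_continuity_pt _ _ _ (rho_deriv Hrho y ltac:(lra))).
    - intros y Hy _. split; [apply (rho_deriv Hrho); lra|].
      destruct (rho_monotone_slow HA Hphi Hre Hs0 Hrho tau y ltac:(lra)) as [Hy' _].
      assert (Hflat := one_sub_drho_sqr_le HA Hphi Hre Hs0 Hrho (s * m) y ltac:(nra) ltac:(nra) ltac:(lra)
        ltac:(lra) ltac:(lra) ltac:(lra)).
      replace (4 * (s * s) / (s * m * (s * m))) with (4 / (m * m)) in Hflat by (field; nra).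
      destruct (rho_clairaut_bounds HA Hphi Hre Hs0 Hrho y ltac:(lra)) as [_ [Hv _]]. nra. }
  assert (4 / (m * m) * (t - tau) <= 4 * T / (m * m)).
  { replace (4 * T / (m * m)) with (4 / (m * m) * T) by (unfold Rdiv; ring).
    apply Rmult_le_compat_l; [apply Rdiv_le_0_compat; nra | lra]. }
  pose proof (rho_monotone_slow HA Hphi Hre Hs0 Hrho 0 tau ltac:(lra)). lra.
Qed.

(** * Continuous dependence of the geodesics *)

Lemma quotient_diff_le a b a' b' c B : 0 < c -> c <= b -> c <= b' <= B -> 0 <= a' <= B ->
  Rabs (a / b - a' / b') <= B * (Rabs (a - a') + Rabs (b - b')) / (c * c).
Proof.
  intros Hc Hb Hb' Ha'.
  replace (a / b - a' / b') with (((a - a') * b' + a' * (b' - b)) / (b * b')) by (field; lra).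
  rewrite Rabs_div by nra. rewrite (Rabs_right (b * b')) by nra.
  assert (N : Rabs ((a - a') * b' + a' * (b' - b)) <= B * (Rabs (a - a') + Rabs (b - b'))).
  { eapply Rle_trans; [apply Rabs_triang|]. rewrite !Rabs_mult, (Rabs_right b'), (Rabs_right a') by lra.
    rewrite (Rabs_minus_sym b'). pose proof (Rabs_pos (a - a')). pose proof (Rabs_pos (b - b')).
    assert (Rabs (a - a') * b' <= Rabs (a - a') * B) by (apply Rmult_le_compat_l; lra).
    assert (a' * Rabs (b - b') <= B * Rabs (b - b')) by (apply Rmult_le_compat_r; lra). lra. }
  unfold Rdiv. apply Rmult_le_compat; [apply Rabs_pos | left; apply Rinv_0_lt_compat; nra | exact N |].
  apply Rinv_le_contravar; nra.
Qed.

Lemma geodesic_rhs_diff_le g g0x g0y v v0 dG L M x y : 0 <= v <= 1 -> 0 <= v0 <= 1 ->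
  Rabs (g - g0x) <= dG -> Rabs (g0x - g0y) <= L * Rabs (x - y) -> Rabs g0y <= M ->
  Rabs (g * (1 - v * v) - g0y * (1 - v0 * v0)) <= dG + L * Rabs (x - y) + 2 * M * Rabs (v - v0).
Proof.
  intros Hv Hv0 H1 H2 H3. set (w := 1 - v * v). set (w0 := 1 - v0 * v0).
  assert (Hw : 0 <= w <= 1) by (unfold w; nra).
  assert (Hww : Rabs (w - w0) <= 2 * Rabs (v - v0)).
  { unfold w, w0. replace (1 - v * v - (1 - v0 * v0)) with (- (v - v0) * (v + v0)) by ring.
    rewrite Rabs_mult, Rabs_Ropp, (Rabs_right (v + v0)) by lra. pose proof (Rabs_pos (v - v0)). nra. }
  replace (g * w - g0y * w0) with ((g - g0x) * w + (g0x - g0y) * w + g0y * (w - w0)) by ring.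
  eapply Rle_trans; [apply Rabs_triang|]. eapply Rle_trans; [apply Rplus_le_compat_r, Rabs_triang|].
  rewrite !Rabs_mult, (Rabs_right w) by lra.
  pose proof (Rabs_pos (g - g0x)). pose proof (Rabs_pos (g0x - g0y)). pose proof (Rabs_pos g0y).
  assert (Rabs (g - g0x) * w <= dG) by nra.
  assert (Rabs (g0x - g0y) * w <= L * Rabs (x - y)) by nra.
  assert (Rabs g0y * Rabs (w - w0) <= M * (2 * Rabs (v - v0)))
    by (apply Rmult_le_compat; [lra | apply Rabs_pos | lra | lra]).
  lra.
Qed.

Lemma energy_rate_le dr dv dd dG L M : 0 <= L -> 0 <= M ->
  Rabs dd <= dG + L * Rabs dr + 2 * M * Rabs dv ->
  2 * dr * dv + 2 * dv * dd <= (2 + L + 4 * M) * (dr * dr + dv * dv) + dG * dG.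
Proof.
  intros HL HM Hdd. set (a := Rabs dr) in *. set (b := Rabs dv) in *.
  assert (a2 : a * a = dr * dr) by (unfold a; rewrite <- Rabs_mult; apply Rabs_right, Rle_ge, sqr_nonneg).
  assert (b2 : b * b = dv * dv) by (unfold b; rewrite <- Rabs_mult; apply Rabs_right, Rle_ge, sqr_nonneg).
  assert (drdv : dr * dv <= a * b) by (unfold a, b; rewrite <- Rabs_mult; apply Rle_abs).
  assert (Hq : dv * dd <= b * Rabs dd) by (unfold b; rewrite <- Rabs_mult; apply Rle_abs).
  assert (a0 : 0 <= a) by apply Rabs_pos. assert (b0 : 0 <= b) by apply Rabs_pos.
  assert (b * Rabs dd <= b * (dG + L * a + 2 * M * b)) by (apply Rmult_le_compat_l; lra).
  pose proof (sqr_nonneg (dG - b)). pose proof (sqr_nonneg (a - b)).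
  assert (L * (2 * (a * b)) <= L * (a * a + b * b)) by (apply Rmult_le_compat_l; nra).
  assert (0 <= M * (b * b)) by (apply Rmult_le_pos; nra).
  nra.
Qed.

(* Gronwall for the energy of the difference of two solutions of [rho'' = G(rho) (1 - rho'^2)]. *)
Lemma trajectory_gap_le (G G0 rho v dd rho0 v0 dd0 : R -> R) x1 X T M L dG :
  0 <= T -> 0 <= M -> 0 <= L -> 0 <= dG ->
  (forall x, x1 <= x <= X -> Rabs (G0 x) <= M) ->
  (forall x y, x1 <= x <= X -> x1 <= y <= X -> Rabs (G0 x - G0 y) <= L * Rabs (x - y)) ->
  (forall x, x1 <= x <= X -> Rabs (G x - G0 x) <= dG) ->
  (forall t, 0 <= t <= T -> x1 <= rho t <= X /\ x1 <= rho0 t <= X /\ 0 <= v t <= 1 /\ 0 <= v0 t <= 1 /\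
     dd t = G (rho t) * (1 - v t * v t) /\ dd0 t = G0 (rho0 t) * (1 - v0 t * v0 t)) ->
  (forall t, 0 <= t -> derivable_pt_lim rho t (v t) /\ derivable_pt_lim v t (dd t) /\
     derivable_pt_lim rho0 t (v0 t) /\ derivable_pt_lim v0 t (dd0 t)) ->
  forall t, 0 <= t <= T ->
  (rho t - rho0 t) * (rho t - rho0 t) + (v t - v0 t) * (v t - v0 t) <=
  ((rho 0 - rho0 0) * (rho 0 - rho0 0) + (v 0 - v0 0) * (v 0 - v0 0) + dG * dG * T) *
    exp ((2 + L + 4 * M) * T).
Proof.
  intros HT HM HL HdG HG0 HL0 HGG Hin Hd t Ht.
  set (E := fun t => (rho t - rho0 t) * (rho t - rho0 t) + (v t - v0 t) * (v t - v0 t)).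
  set (C := 2 + L + 4 * M).
  assert (H : E t <= (E 0 + dG * dG * (t - 0)) * exp (C * (t - 0))).
  { apply (gronwall nil E (fun t => 2 * (rho t - rho0 t) * (v t - v0 t) + 2 * (v t - v0 t) * (dd t - dd0 t)));
      [lra | unfold C; lra | apply sqr_nonneg | |].
    - intros y Hy. destruct (Hd y ltac:(lra)) as [D1 [D2 [D3 D4]]]. unfold E.
      pose proof (derivable_pt_lim_continuity_pt _ _ _ D1). pose proof (derivable_pt_lim_continuity_pt _ _ _ D2).
      pose proof (derivable_pt_lim_continuity_pt _ _ _ D3). pose proof (derivable_pt_lim_continuity_pt _ _ _ D4).
      continuity_by_rules.
    - intros y Hy _. destruct (Hd y ltac:(lra)) as [D1 [D2 [D3 D4]]]. split; [unfold E; derivative_by_rules; ring|].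
      destruct (Hin y ltac:(lra)) as [I1 [I2 [I3 [I4 [I5 I6]]]]].
      unfold E, C. apply energy_rate_le; [exact HL | exact HM|]. rewrite I5, I6.
      apply (geodesic_rhs_diff_le _ (G0 (rho y))); [exact I3 | exact I4 | apply HGG; lra | apply HL0; lra
        | apply HG0; lra]. }
  unfold E in H. replace (t - 0) with t in H by ring.
  eapply Rle_trans; [exact H|]. fold C. apply Rmult_le_compat.
  - pose proof (sqr_nonneg (rho 0 - rho0 0)). pose proof (sqr_nonneg (v 0 - v0 0)).
    pose proof (sqr_nonneg dG). assert (0 <= dG * dG * t) by (apply Rmult_le_pos; lra). lra.
  - left; apply exp_pos.
  - assert (dG * dG * t <= dG * dG * T) by (apply Rmult_le_compat_l; [apply sqr_nonneg | lra]). lra.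
  - apply exp_le_mono. apply Rmult_le_compat_l; unfold C; lra.
Qed.

Section ProfileQuotient.
Context {phi : R -> R} {r e : R} {A dA : R -> R}.
Hypotheses (HA : is_A phi r e A dA) (Hphi : is_cutoff phi) (Hre : admissible r e).
Variables (x1 X : R).
Hypothesis Hx1 : 0 < x1 <= r.

Lemma profile_bounds_on x : x1 <= x <= X -> sin x1 <= A x <= exp X /\ 0 < dA x <= exp X.
Proof.
  intros Hx. destruct (A_dA_le_exp HA Hphi Hre x ltac:(lra)) as [Q1 Q2].
  pose proof (exp_le_mono x X ltac:(lra)).
  rewrite <- (proj1 (A_eq_sin HA Hphi Hre x1 ltac:(lra))).
  pose proof (A_nondecreasing HA Hphi Hre x1 x ltac:(lra)). pose proof (dA_pos HA Hphi Hre x ltac:(lra)). lra.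
Qed.

Lemma sin_pos_of_le_r : 0 < sin x1.
Proof. destruct Hre as [_ [? ?]]. apply sin_pos_lt_PI2; lra. Qed.

Lemma profile_quotient_bound x : x1 <= x <= X -> Rabs (dA x / A x) <= exp X / sin x1.
Proof.
  intros Hx. destruct (profile_bounds_on x Hx) as [[Q1 Q2] [Q3 Q4]]. pose proof sin_pos_of_le_r.
  rewrite Rabs_right by (apply Rle_ge; left; apply Rdiv_lt_0_compat; lra).
  unfold Rdiv. apply Rmult_le_compat; [lra | left; apply Rinv_0_lt_compat; lra | lra |].
  apply Rinv_le_contravar; lra.
Qed.

Lemma profile_quotient_lipschitz x y : x1 <= x <= X -> x1 <= y <= X ->
  Rabs (dA x / A x - dA y / A y) <= (2 * (exp X * exp X) / (sin x1 * sin x1)) * Rabs (x - y).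
Proof.
  intros Hx Hy. destruct (profile_bounds_on x Hx) as [[Q1 Q2] [Q3 Q4]].
  destruct (profile_bounds_on y Hy) as [[R1 R2] [R3 R4]]. pose proof sin_pos_of_le_r.
  destruct (A_dA_lipschitz HA Hphi Hre X x y ltac:(lra) ltac:(lra)) as [L1 L2].
  eapply Rle_trans; [apply (quotient_diff_le _ _ _ _ (sin x1) (exp X)); lra|].
  apply Rle_trans with (exp X * (exp X * Rabs (x - y) + exp X * Rabs (x - y)) / (sin x1 * sin x1)).
  - unfold Rdiv. apply Rmult_le_compat_r; [left; apply Rinv_0_lt_compat; nra|].
    apply Rmult_le_compat_l; lra.
  - right. field. lra.
Qed.

End ProfileQuotient.


Definition in_params (eta eps0 r e : R) : Prop :=
  PI / 4 - eta <= r <= PI / 4 + eta /\ 0 <= e <= eps0.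

Lemma rho_at_zero A dA rho drho ddrho : is_rho A dA 0 rho drho ddrho ->
  (forall t, 0 <= t -> rho t = t /\ drho t = 1) /\ (forall t, 0 < t -> ddrho t = 0).
Proof.
  intros [Dr [Dv [_ Hid]]]. specialize (Hid eq_refl).
  assert (D1 : forall t, 0 <= t -> drho t = 1).
  { intros t Ht. apply (uniqueness_limite (fun t => t) t); [|apply derivable_pt_lim_id].
    exact (derivable_pt_lim_ext rho _ t _ Hid (Dr t Ht)). }
  split; [intros t Ht; split; auto|].
  intros t Ht. apply (uniqueness_limite drho t); [apply Dv; lra|].
  apply (derivable_pt_lim_locally_ext (fun _ => 1) drho t 0 (2 * t) 0); [lra | |apply derivable_pt_lim_const].
  intros z Hz. symmetry. apply D1. lra.
Qed.

Section Family.
Context {phi : R -> R} {eta eps0 : R} {A dA : R -> R -> R -> R} {rho drho ddrho : R -> R -> R -> R -> R}.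
Hypotheses (Hphi : is_cutoff phi) (Hsmooth : smooth phi) (Heps0 : 0 < eps0)
  (Hsmall : PI / 4 + eta + eps0 < PI / 2)
  (HA : forall r e, PI / 4 - eta <= r <= PI / 4 + eta -> 0 <= e <= eps0 ->
          is_A phi r e (A r e) (dA r e))
  (Hrho : forall s r e, 0 <= s -> PI / 4 - eta <= r <= PI / 4 + eta -> 0 <= e <= eps0 ->
          is_rho (A r e) (dA r e) s (rho s r e) (drho s r e) (ddrho s r e)).

Let rmin := Rmin 1 (PI / 4 - eta).

Lemma rmin_bounds : 0 < rmin <= 1.
Proof. unfold rmin. split; [apply Rmin_glb_lt; lra | apply Rmin_l]. Qed.

Lemma family_admissible r e : in_params eta eps0 r e -> admissible r e /\ rmin <= r.
Proof. intros [Hr He]. split; [unfold admissible; lra | unfold rmin; pose proof (Rmin_r 1 (PI / 4 - eta)); lra]. Qed.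

Lemma family_A r e : in_params eta eps0 r e -> is_A phi r e (A r e) (dA r e).
Proof. intros [Hr He]. exact (HA r e Hr He). Qed.

Lemma family_rho s r e : 0 <= s -> in_params eta eps0 r e ->
  is_rho (A r e) (dA r e) s (rho s r e) (drho s r e) (ddrho s r e).
Proof. intros Hs [Hr He]. exact (Hrho s r e Hs Hr He). Qed.

Lemma rho_in_band s0 T s r e : 0 < s0 -> in_params eta eps0 r e -> Rabs (s - s0) < s0 / 2 ->
  forall t, 0 <= t <= T ->
  Rmin (s0 / 2) rmin <= rho s r e t <= 2 * s0 + T /\ 0 <= drho s r e t <= 1 /\
  ddrho s r e t = dA r e (rho s r e t) / A r e (rho s r e t) * (1 - drho s r e t * drho s r e t).
Proof.
  intros Hs0 Hp Hs t Ht. apply Rabs_lt_between in Hs.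
  destruct (family_admissible r e Hp) as [Hre _].
  assert (Hs' : 0 < s) by lra.
  pose proof (family_A r e Hp) as HAp. pose proof (family_rho s r e ltac:(lra) Hp) as Hrp.
  destruct (rho_clairaut_bounds HAp Hphi Hre Hs' Hrp t ltac:(lra)) as [B1 [B2 _]].
  destruct (rho_monotone_slow HAp Hphi Hre Hs' Hrp 0 t ltac:(lra)) as [_ M2].
  rewrite (proj1 (rho_init Hs' Hrp)) in M2. pose proof (Rmin_l (s0 / 2) rmin).
  split; [lra | split; [exact B2 | apply (rho_ode Hs' Hrp); lra]].
Qed.

Lemma quotient_family_close r0 e0 x1 X kap : in_params eta eps0 r0 e0 -> 0 < x1 <= rmin -> x1 <= X ->
  0 < kap -> exists del, 0 < del /\ forall r e, in_params eta eps0 r e ->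
    Rabs (r - r0) < del -> Rabs (e - e0) < del -> forall x, x1 <= x <= X ->
    Rabs (dA r e x / A r e x - dA r0 e0 x / A r0 e0 x) <= kap.
Proof.
  intros Hp0 Hx1 HX Hkap. destruct (family_admissible r0 e0 Hp0) as [Hre0 Hr0].
  pose proof (family_A r0 e0 Hp0) as HA0.
  assert (S0 := sin_pos_of_le_r Hre0 x1 ltac:(lra)). pose proof (exp_pos X).
  assert (Heta' : 0 < kap * (sin x1 * sin x1) / (2 * exp X))
    by (apply Rdiv_lt_0_compat; [apply Rmult_lt_0_compat; nra | lra]).
  destruct (A_close Hphi Hsmooth r0 e0 X _ Hre0 ltac:(lra) Heta') as [del [Hdel Hclose]].
  exists del. split; [exact Hdel|]. intros r e Hp Hr He x Hx.
  destruct (family_admissible r e Hp) as [Hre Hrr].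
  destruct (Hclose r e _ _ _ _ Hre Hr He (family_A r e Hp) HA0 x ltac:(lra)) as [C1 C2].
  destruct (profile_bounds_on (family_A r e Hp) Hphi Hre x1 X ltac:(lra) x Hx) as [[Q1 _] _].
  destruct (profile_bounds_on HA0 Hphi Hre0 x1 X ltac:(lra) x Hx) as [[R1 R2] [R3 R4]].
  set (c := sin x1) in *. set (B := exp X) in *.
  eapply Rle_trans; [apply (quotient_diff_le _ _ _ _ c B); lra|].
  replace kap with (B * (kap * (c * c) / (2 * B) + kap * (c * c) / (2 * B)) / (c * c))
    by (field; split; lra).
  unfold Rdiv at 1 3. apply Rmult_le_compat_r; [left; apply Rinv_0_lt_compat; nra|].
  apply Rmult_le_compat_l; lra.
Qed.

Let G r e x := dA r e x / A r e x.

Lemma rho_pair_gap s0 r0 e0 T s r e M L kap : 0 < s0 ->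
  in_params eta eps0 r0 e0 -> in_params eta eps0 r e -> 0 <= T -> Rabs (s - s0) < s0 / 2 ->
  0 <= M -> 0 <= L -> 0 <= kap ->
  (forall x, Rmin (s0 / 2) rmin <= x <= 2 * s0 + T -> Rabs (G r0 e0 x) <= M) ->
  (forall x y, Rmin (s0 / 2) rmin <= x <= 2 * s0 + T -> Rmin (s0 / 2) rmin <= y <= 2 * s0 + T ->
     Rabs (G r0 e0 x - G r0 e0 y) <= L * Rabs (x - y)) ->
  (forall x, Rmin (s0 / 2) rmin <= x <= 2 * s0 + T -> Rabs (G r e x - G r0 e0 x) <= kap) ->
  forall t, 0 <= t <= T ->
  (rho s r e t - rho s0 r0 e0 t) * (rho s r e t - rho s0 r0 e0 t) +
    (drho s r e t - drho s0 r0 e0 t) * (drho s r e t - drho s0 r0 e0 t) <=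
    ((s - s0) * (s - s0) + kap * kap * T) * exp ((2 + L + 4 * M) * T) /\
  Rabs (ddrho s r e t - ddrho s0 r0 e0 t) <=
    kap + L * Rabs (rho s r e t - rho s0 r0 e0 t) + 2 * M * Rabs (drho s r e t - drho s0 r0 e0 t).
Proof.
  intros Hs0 Hp0 Hp HT Ds M0 L0 Hkap HM HL HG t Ht.
  assert (Hs : 0 < s) by (apply Rabs_lt_between in Ds; lra).
  pose proof (family_rho s r e ltac:(lra) Hp) as Hrp. pose proof (family_rho s0 r0 e0 ltac:(lra) Hp0) as Hrp0.
  assert (Hin : forall t', 0 <= t' <= T ->
    Rmin (s0 / 2) rmin <= rho s r e t' <= 2 * s0 + T /\ Rmin (s0 / 2) rmin <= rho s0 r0 e0 t' <= 2 * s0 + T /\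
    0 <= drho s r e t' <= 1 /\ 0 <= drho s0 r0 e0 t' <= 1 /\
    ddrho s r e t' = G r e (rho s r e t') * (1 - drho s r e t' * drho s r e t') /\
    ddrho s0 r0 e0 t' = G r0 e0 (rho s0 r0 e0 t') * (1 - drho s0 r0 e0 t' * drho s0 r0 e0 t')).
  { intros t' Ht'. destruct (rho_in_band s0 T s r e Hs0 Hp Ds t' Ht') as [B1 [B2 B3]].
    destruct (rho_in_band s0 T s0 r0 e0 Hs0 Hp0 ltac:(rewrite Rminus_diag, Rabs_R0; lra) t' Ht')
      as [C1 [C2 C3]].
    unfold G. tauto. }
  assert (Hd : forall t', 0 <= t' -> derivable_pt_lim (rho s r e) t' (drho s r e t') /\
    derivable_pt_lim (drho s r e) t' (ddrho s r e t') /\ derivable_pt_lim (rho s0 r0 e0) t' (drho s0 r0 e0 t') /\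
    derivable_pt_lim (drho s0 r0 e0) t' (ddrho s0 r0 e0 t')).
  { intros t' Ht'. repeat split;
      [apply (rho_deriv Hrp) | apply (drho_deriv Hrp) | apply (rho_deriv Hrp0) | apply (drho_deriv Hrp0)];
      exact Ht'. }
  split.
  - assert (H := trajectory_gap_le (G r e) (G r0 e0) _ _ _ _ _ _ (Rmin (s0 / 2) rmin) (2 * s0 + T) T M L kap
      HT M0 L0 Hkap HM HL HG Hin Hd t Ht).
    destruct (rho_init Hs Hrp) as [i1 i2]. destruct (rho_init Hs0 Hrp0) as [j1 j2].
    rewrite i1, i2, j1, j2 in H. replace (0 - 0) with 0 in H by ring. rewrite Rmult_0_l, Rplus_0_r in H. exact H.
  - destruct (Hin t Ht) as [I1 [I2 [I3 [I4 [-> ->]]]]].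
    apply (geodesic_rhs_diff_le _ (G r0 e0 (rho s r e t))); auto.
Qed.

Lemma rho_family_close s0 r0 e0 T eps : 0 < s0 -> in_params eta eps0 r0 e0 -> 0 <= T -> 0 < eps ->
  exists del, 0 < del /\ forall s r e, in_params eta eps0 r e ->
    Rabs (s - s0) < del -> Rabs (r - r0) < del -> Rabs (e - e0) < del -> forall t, 0 <= t <= T ->
    Rabs (rho s r e t - rho s0 r0 e0 t) <= eps /\ Rabs (drho s r e t - drho s0 r0 e0 t) <= eps /\
    Rabs (ddrho s r e t - ddrho s0 r0 e0 t) <= eps.
Proof.
  intros Hs0 Hp0 HT Heps. destruct (family_admissible r0 e0 Hp0) as [Hre0 Hr0]. pose proof rmin_bounds.
  set (x1 := Rmin (s0 / 2) rmin). set (X := 2 * s0 + T).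
  assert (Hx1 : 0 < x1 <= rmin) by (split; [apply Rmin_glb_lt; lra | apply Rmin_r]).
  assert (Hx1r : 0 < x1 <= r0) by lra.
  assert (x1X : x1 <= X) by (assert (x1 <= s0 / 2) by apply Rmin_l; unfold X; lra).
  pose proof (profile_quotient_bound (family_A r0 e0 Hp0) Hphi Hre0 x1 X Hx1r) as HM.
  pose proof (profile_quotient_lipschitz (family_A r0 e0 Hp0) Hphi Hre0 x1 X Hx1r) as HL.
  assert (S1 := sin_pos_of_le_r Hre0 x1 Hx1r). pose proof (exp_pos X).
  set (M := exp X / sin x1) in HM. set (L := 2 * (exp X * exp X) / (sin x1 * sin x1)) in HL.
  assert (M0 : 0 <= M) by (left; apply Rdiv_lt_0_compat; lra).
  assert (L0 : 0 <= L) by (left; apply Rdiv_lt_0_compat; nra).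
  set (eps1 := eps / (1 + L + 2 * M)).
  assert (e1p : 0 < eps1) by (apply Rdiv_lt_0_compat; lra).
  assert (e1e : eps1 * (1 + L + 2 * M) = eps) by (unfold eps1; field; lra).
  set (eC := exp ((2 + L + 4 * M) * T)). pose proof (exp_pos ((2 + L + 4 * M) * T)) as eC0. fold eC in eC0.
  set (kap := Rmin (Rmin 1 eps1) (eps1 * eps1 / ((T + 1) * eC))).
  assert (kp : 0 < kap) by (repeat apply Rmin_glb_lt; [lra | lra | apply Rdiv_lt_0_compat; nra]).
  assert (k1 : kap <= 1 /\ kap <= eps1) by (split; eapply Rle_trans; try apply Rmin_l; apply Rmin_l || apply Rmin_r).
  assert (k3 : kap * ((T + 1) * eC) <= eps1 * eps1)
    by (assert (Hk : kap <= eps1 * eps1 / ((T + 1) * eC)) by apply Rmin_r; apply Rle_div_r in Hk; nra).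
  destruct (quotient_family_close r0 e0 x1 X kap Hp0 Hx1 x1X kp) as [d1 [d1p Hd1]].
  exists (Rmin (Rmin (s0 / 2) kap) d1). split; [apply Rmin_glb_lt; [apply Rmin_glb_lt|]; lra|].
  intros s r e Hp Ds Dr De t Ht.
  apply Rmin_Rgt in Ds as [Ds _]. apply Rmin_Rgt in Ds as [Ds Dsk].
  apply Rmin_Rgt in Dr as [_ Dr]. apply Rmin_Rgt in De as [_ De].
  destruct (rho_pair_gap s0 r0 e0 T s r e M L kap Hs0 Hp0 Hp HT Ds M0 L0 ltac:(lra) HM HL
    (Hd1 r e Hp Dr De) t Ht) as [Hgap Hdd]. fold eC in Hgap.
  assert (Hgap' : ((s - s0) * (s - s0) + kap * kap * T) * eC <= eps1 * eps1).
  { apply Rabs_lt_between in Dsk. destruct k1 as [k1 _].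
    assert ((s - s0) * (s - s0) <= kap) by nra.
    assert (kap * kap * T <= kap * T) by (apply Rmult_le_compat_r; nra).
    assert (((s - s0) * (s - s0) + kap * kap * T) * eC <= kap * (T + 1) * eC)
      by (apply Rmult_le_compat_r; lra).
    lra. }
  pose proof (sqr_nonneg (rho s r e t - rho s0 r0 e0 t)). pose proof (sqr_nonneg (drho s r e t - drho s0 r0 e0 t)).
  assert (R1 : Rabs (rho s r e t - rho s0 r0 e0 t) <= eps1) by (apply Rabs_le_of_sqr_le; nra).
  assert (R2 : Rabs (drho s r e t - drho s0 r0 e0 t) <= eps1) by (apply Rabs_le_of_sqr_le; nra).
  assert (L * Rabs (rho s r e t - rho s0 r0 e0 t) <= L * eps1) by (apply Rmult_le_compat_l; lra).
  assert (M * Rabs (drho s r e t - drho s0 r0 e0 t) <= M * eps1) by (apply Rmult_le_compat_l; lra).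
  assert (eps1 <= eps) by nra.
  repeat split; lra.
Qed.

Lemma rho_continuous_pos t0 s0 r0 e0 : Dom1 eta eps0 t0 s0 r0 e0 -> 0 < s0 ->
  forall eps, 0 < eps -> exists del, 0 < del /\
  forall t s r e, Dom1 eta eps0 t s r e ->
    Rabs (t - t0) < del -> Rabs (s - s0) < del -> Rabs (r - r0) < del -> Rabs (e - e0) < del ->
    Rabs (rho s r e t - rho s0 r0 e0 t0) < eps /\
    Rabs (drho s r e t - drho s0 r0 e0 t0) < eps /\
    Rabs (ddrho s r e t - ddrho s0 r0 e0 t0) < eps.
Proof.
  intros [Ht0 [_ Hp0]] Hs0 eps Heps.
  destruct (family_admissible r0 e0 Hp0) as [Hre0 _].
  destruct (rho_family_close s0 r0 e0 (t0 + 1) (eps / 2) Hs0 Hp0 ltac:(lra) ltac:(lra)) as [d1 [d1p Hd1]].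
  destruct (geodesic_time_continuous (family_A r0 e0 Hp0) Hphi Hre0 Hs0 (family_rho s0 r0 e0 ltac:(lra) Hp0)
    t0 (eps / 2) Ht0 ltac:(lra)) as [d2 [d2p Hd2]].
  exists (Rmin 1 (Rmin d1 d2)). split; [repeat apply Rmin_glb_lt; lra|].
  intros t s r e [Ht [Hs Hp]] Dt Ds Dr De.
  apply Rmin_Rgt in Dt as [Dt1 Dt]. apply Rmin_Rgt in Dt as [_ Dt2].
  apply Rmin_Rgt in Ds as [_ Ds]. apply Rmin_Rgt in Ds as [Ds _].
  apply Rmin_Rgt in Dr as [_ Dr]. apply Rmin_Rgt in Dr as [Dr _].
  apply Rmin_Rgt in De as [_ De]. apply Rmin_Rgt in De as [De _].
  destruct (Hd1 s r e Hp Ds Dr De t ltac:(apply Rabs_lt_between in Dt1; lra)) as [R1 [R2 R3]].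
  destruct (Hd2 t Ht Dt2) as [T1 [T2 T3]].
  pose proof (R_dist_tri (rho s r e t) (rho s0 r0 e0 t0) (rho s0 r0 e0 t)).
  pose proof (R_dist_tri (drho s r e t) (drho s0 r0 e0 t0) (drho s0 r0 e0 t)).
  pose proof (R_dist_tri (ddrho s r e t) (ddrho s0 r0 e0 t0) (ddrho s0 r0 e0 t)).
  unfold R_dist in *. repeat split; lra.
Qed.

Lemma rho_continuous_zero t0 r0 e0 : Dom1 eta eps0 t0 0 r0 e0 ->
  forall eps, 0 < eps -> exists del, 0 < del /\
  forall t s r e, Dom1 eta eps0 t s r e ->
    Rabs (t - t0) < del -> Rabs (s - 0) < del -> Rabs (r - r0) < del -> Rabs (e - e0) < del ->
    Rabs (rho s r e t - rho 0 r0 e0 t0) < eps.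
Proof.
  intros [Ht0 [_ Hp0]] eps Heps.
  destruct (rho_close_to_id phi rmin Hphi rmin_bounds (t0 + 1) (eps / 2) ltac:(lra) ltac:(lra))
    as [ds [dsp Hds]].
  exists (Rmin (Rmin 1 (eps / 2)) ds). split; [repeat apply Rmin_glb_lt; lra|].
  intros t s r e [Ht [Hs Hp]] Dt Ds Dr De.
  apply Rmin_Rgt in Dt as [Dt _]. apply Rmin_Rgt in Dt as [Dt1 Dt2].
  apply Rmin_Rgt in Ds as [_ Ds]. rewrite Rminus_0_r in Ds.
  apply Rabs_lt_between in Dt1. apply Rabs_lt_between in Dt2. apply Rabs_lt_between in Ds.
  rewrite (proj1 (proj1 (rho_at_zero _ _ _ _ _ (family_rho 0 r0 e0 ltac:(lra) Hp0)) t0 Ht0)).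
  destruct Hs as [Hs | <-].
  - destruct (family_admissible r e Hp) as [Hre Hrr].
    assert (H := Hds r e _ _ s _ (drho s r e) (ddrho s r e) Hre Hrr (family_A r e Hp) ltac:(lra)
      (family_rho s r e ltac:(lra) Hp) t ltac:(lra)).
    apply Rabs_le_between in H. apply Rabs_lt_between. lra.
  - rewrite (proj1 (proj1 (rho_at_zero _ _ _ _ _ (family_rho 0 r e ltac:(lra) Hp)) t Ht)).
    apply Rabs_lt_between. lra.
Qed.

(* For [s0 = 0] and [t0 > 0]: for small [s] the geodesic is close to the ray, so [rho(t) >= t0 / 4]
   and [geodesic_flat_estimates] apply. *)
Lemma drho_continuous_zero t0 r0 e0 : Dom1 eta eps0 t0 0 r0 e0 -> 0 < t0 ->
  forall eps, 0 < eps -> exists del, 0 < del /\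
  forall t s r e, Dom1 eta eps0 t s r e ->
    Rabs (t - t0) < del -> Rabs (s - 0) < del -> Rabs (r - r0) < del -> Rabs (e - e0) < del ->
    Rabs (drho s r e t - drho 0 r0 e0 t0) < eps /\ Rabs (ddrho s r e t - ddrho 0 r0 e0 t0) < eps.
Proof.
  intros [Ht0 [_ Hp0]] t0p eps Heps. pose proof rmin_bounds.
  destruct (rho_at_zero _ _ _ _ _ (family_rho 0 r0 e0 ltac:(lra) Hp0)) as [Q1 Q2].
  rewrite (proj2 (Q1 t0 Ht0)), (Q2 t0 t0p). clear Q1 Q2.
  destruct (rho_close_to_id phi rmin Hphi rmin_bounds (t0 + 1) (t0 / 4) ltac:(lra) ltac:(lra))
    as [ds [dsp Hds]].
  set (h := Rmin (t0 / 4) rmin).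
  assert (hp : 0 < h) by (apply Rmin_glb_lt; lra).
  assert (ht : h <= t0 / 4) by apply Rmin_l. assert (hr : h <= rmin) by apply Rmin_r.
  set (B := exp (t0 + 3)). assert (B0 : 0 < B) by apply exp_pos.
  assert (h3 : 0 < h * h * h) by (repeat apply Rmult_lt_0_compat; lra).
  set (sgm := eps * (h * h * h) / (8 * (B + 1))).
  assert (sgmp : 0 < sgm) by (apply Rdiv_lt_0_compat; [apply Rmult_lt_0_compat|]; lra).
  exists (Rmin (Rmin (t0 / 2) ds) (Rmin rmin sgm)). split; [repeat apply Rmin_glb_lt; lra|].
  intros t s r e [Ht [Hs Hp]] Dt Ds Dr De. rewrite !Rminus_0_r in *.
  apply Rmin_Rgt in Dt as [Dt Dt']. apply Rmin_Rgt in Dt as [Dt _]. apply Rmin_Rgt in Dt' as [Dt1 _].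
  apply Rmin_Rgt in Ds as [Ds Ds']. apply Rmin_Rgt in Ds as [_ Ds1]. apply Rmin_Rgt in Ds' as [Ds2 Ds3].
  apply Rabs_lt_between in Dt. apply Rabs_lt_between in Dt1. apply Rabs_lt_between in Ds1.
  apply Rabs_lt_between in Ds2. apply Rabs_lt_between in Ds3.
  destruct Hs as [Hs | <-].
  2:{ destruct (rho_at_zero _ _ _ _ _ (family_rho 0 r e ltac:(lra) Hp)) as [Q1 Q2].
      rewrite (proj2 (Q1 t ltac:(lra))), (Q2 t ltac:(lra)), Rminus_diag, Rabs_R0. lra. }
  destruct (family_admissible r e Hp) as [Hre Hrr].
  pose proof (family_A r e Hp) as HAp. pose proof (family_rho s r e ltac:(lra) Hp) as Hrp.
  assert (Hclose := Hds r e _ _ s _ (drho s r e) (ddrho s r e) Hre Hrr HAp ltac:(lra) Hrp t ltac:(lra)).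
  apply Rabs_le_between in Hclose.
  destruct (rho_monotone_slow HAp Hphi Hre Hs Hrp 0 t ltac:(lra)) as [_ Hup].
  rewrite (proj1 (rho_init Hs Hrp)) in Hup.
  destruct (geodesic_flat_estimates HAp Hphi Hre Hs Hrp h t ltac:(lra) hp ltac:(lra) ltac:(lra)
    ltac:(lra) ltac:(lra)) as [F1 F2].
  assert (Hsgm : 8 * (B + 1) * s / (h * h * h) < eps).
  { apply Rlt_div_l; [lra|].
    assert (s * (8 * (B + 1)) < eps * (h * h * h)) by (apply Rlt_div_r; [lra | unfold sgm in Ds3; lra]).
    lra. }
  assert (s * s <= s) by nra.
  split.
  - enough (4 * (s * s) / (h * h) <= 8 * (B + 1) * s / (h * h * h)) by lra.
    replace (4 * (s * s) / (h * h)) with (4 * (s * s) * h / (h * h * h)) by (field; lra).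
    unfold Rdiv. apply Rmult_le_compat_r; [left; apply Rinv_0_lt_compat; lra | nra].
  - enough (8 * exp (rho s r e t) * (s * s) / (h * h * h) <= 8 * (B + 1) * s / (h * h * h)) by lra.
    assert (exp (rho s r e t) <= B) by (apply exp_le_mono; lra).
    pose proof (exp_pos (rho s r e t)).
    unfold Rdiv. apply Rmult_le_compat_r; [left; apply Rinv_0_lt_compat; lra | nra].
Qed.

Lemma rho_cont4 : cont4_on (Dom1 eta eps0) (fun t s r e => rho s r e t).
Proof.
  intros t0 s0 r0 e0 HD eps Heps. pose proof HD as [_ [[Hs0 | Hs0] _]]; [|subst s0].
  - destruct (rho_continuous_pos t0 s0 r0 e0 HD Hs0 eps Heps) as [d [dp Hd]].
    exists d. split; [exact dp|]. intros t s r e HD' Dt Ds Dr De. apply (Hd t s r e HD' Dt Ds Dr De).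
  - exact (rho_continuous_zero t0 r0 e0 HD eps Heps).
Qed.

Lemma derivatives_continuous_at t0 s0 r0 e0 : Dom2 eta eps0 t0 s0 r0 e0 ->
  forall eps, 0 < eps -> exists del, 0 < del /\
  forall t s r e, Dom1 eta eps0 t s r e ->
    Rabs (t - t0) < del -> Rabs (s - s0) < del -> Rabs (r - r0) < del -> Rabs (e - e0) < del ->
    Rabs (drho s r e t - drho s0 r0 e0 t0) < eps /\ Rabs (ddrho s r e t - ddrho s0 r0 e0 t0) < eps.
Proof.
  intros [HD Hn] eps Heps. pose proof HD as [Ht0 [[Hs0 | Hs0] _]]; [|subst s0].
  - destruct (rho_continuous_pos t0 s0 r0 e0 HD Hs0 eps Heps) as [d [dp Hd]].
    exists d. split; [exact dp|]. intros t s r e HD' Dt Ds Dr De. apply (Hd t s r e HD' Dt Ds Dr De).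
  - apply (drho_continuous_zero t0 r0 e0 HD); [|exact Heps].
    destruct Ht0 as [Ht0 | <-]; [exact Ht0 | tauto].
Qed.

Lemma drho_cont4 : cont4_on (Dom2 eta eps0) (fun t s r e => drho s r e t).
Proof.
  intros t0 s0 r0 e0 HD eps Heps. destruct (derivatives_continuous_at t0 s0 r0 e0 HD eps Heps) as [d [dp Hd]].
  exists d. split; [exact dp|]. intros t s r e [HD' _] Dt Ds Dr De. apply (Hd t s r e HD' Dt Ds Dr De).
Qed.

Lemma ddrho_cont4 : cont4_on (Dom2 eta eps0) (fun t s r e => ddrho s r e t).
Proof.
  intros t0 s0 r0 e0 HD eps Heps. destruct (derivatives_continuous_at t0 s0 r0 e0 HD eps Heps) as [d [dp Hd]].
  exists d. split; [exact dp|]. intros t s r e [HD' _] Dt Ds Dr De. apply (Hd t s r e HD' Dt Ds Dr De).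
Qed.

End Family.

Theorem lemma3p10
  (phi : R -> R)
  (Hphi_smooth : smooth phi)
  (Hphi_bd : forall x, 0 <= phi x <= 1)
  (Hphi_0 : forall x, x <= 0 -> phi x = 0)
  (Hphi_1 : forall x, 1 <= x -> phi x = 1)
  (eta eps0 : R) (Heta : 0 < eta) (Heps0 : 0 < eps0)
  (Hsmall : PI / 4 + eta + eps0 < PI / 2)
  (A dA : R -> R -> R -> R)
  (HA : forall r e, PI / 4 - eta <= r <= PI / 4 + eta -> 0 <= e <= eps0 ->
          is_A phi r e (A r e) (dA r e))
  (rho drho ddrho : R -> R -> R -> R -> R)
  (Hrho : forall s r e, 0 <= s -> PI / 4 - eta <= r <= PI / 4 + eta -> 0 <= e <= eps0 ->
          is_rho (A r e) (dA r e) s (rho s r e) (drho s r e) (ddrho s r e)) :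
  cont4_on (Dom1 eta eps0) (fun t s r e => rho s r e t) /\
  cont4_on (Dom2 eta eps0) (fun t s r e => drho s r e t) /\
  cont4_on (Dom2 eta eps0) (fun t s r e => ddrho s r e t).
Proof.
  assert (Hphi : is_cutoff phi) by exact (conj Hphi_bd (conj Hphi_0 Hphi_1)).
  split; [|split].
  - exact (rho_cont4 Hphi Hphi_smooth Heps0 Hsmall HA Hrho).
  - exact (drho_cont4 Hphi Hphi_smooth Heps0 Hsmall HA Hrho).
  - exact (ddrho_cont4 Hphi Hphi_smooth Heps0 Hsmall HA Hrho).
Qed.
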